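(* Let $X$ be as in the context. Then $X$ is positive recurrent if either (a) $v(x)\gtrsim x^c$ for some constant $c\le 2$ and $\limsup_{x\to\infty}J(x)<c-1$, or (b) $v(x)\gtrsim x^c$ for some constant $c>2$ and $\limsup_{x\to\infty}H_1(x)<1$.
   Context: Let $\mathbb S\subseteq\mathbb Z_{\ge0}$ be an infinite set and let $X$ be an irreducible continuous-time Markov chain on $\mathbb S$ whose generator acts on functions $f:\mathbb S\to\mathbb R$ by $\mathcal A f(x)=\sum_{\eta\in\mathbb Z}\lambda_\eta(x)\big(f(x+\eta)-f(x)\big)$, where $\lambda_\eta(x)$ is the rate of the jump $x\to x+\eta$ (and $\lambda_\eta(x)=0$ whenever $x+\eta\notin\mathbb S$). Standing assumption: (a) there is a finite set $\Gamma\subset\mathbb Z$ such that $\lambda_\eta\equiv0$ for $\eta\notin\Gamma$; (b) $0\le\lambda_\eta(x)<\infty$ for all $x,\eta$. Define $m(x)=\sum_{\eta}\eta\,\lambda_\eta(x)$, $v(x)=\frac12\sum_\eta\eta^2\lambda_\eta(x)$ (positive on $\mathbb S$), $J(x)=\dfrac{m(x)x}{v(x)}$, and for $x>1$, $H_1(x)=\dfrac{(\log x)(m(x)x-v(x))}{v(x)}$. Notation: $g\gtrsim h$ means there is $C>0$ with $h(x)\le Cg(x)$ for all sufficiently large $x\in\mathbb S$. *)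

From Stdlib Require Import Reals ZArith List.
Import ListNotations.
Open Scope R_scope.

(* Rates: [lam eta x] is the rate of the jump x -> x + eta.
   Gam is a finite (duplicate-free) list containing every eta with a
   possibly nonzero rate, so sums over eta in Z reduce to sums over Gam. *)

Definition sumG (Gam : list Z) (f : Z -> R) : R :=
  fold_right Rplus 0 (map f Gam).

Definition drift (Gam : list Z) (lam : Z -> Z -> R) (x : Z) : R :=
  sumG Gam (fun eta => IZR eta * lam eta x).

Definition vdiff (Gam : list Z) (lam : Z -> Z -> R) (x : Z) : R :=
  / 2 * sumG Gam (fun eta => (IZR eta) ^ 2 * lam eta x).

Definition Jfun (Gam : list Z) (lam : Z -> Z -> R) (x : Z) : R :=
  drift Gam lam x * IZR x / vdiff Gam lam x.

Definition H1fun (Gam : list Z) (lam : Z -> Z -> R) (x : Z) : R :=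
  ln (IZR x) * (drift Gam lam x * IZR x - vdiff Gam lam x) / vdiff Gam lam x.

(* Genuine jumps: eta <> 0 (a jump of size 0 does not move the chain). *)
Definition realSteps (Gam : list Z) : list Z :=
  filter (fun e => negb (Z.eqb e 0)) Gam.

Definition qrate (Gam : list Z) (lam : Z -> Z -> R) (x : Z) : R :=
  sumG (realSteps Gam) (fun eta => lam eta x).

(* transition probability of the embedded jump chain: x -> x + eta *)
Definition jumpP (Gam : list Z) (lam : Z -> Z -> R) (x eta : Z) : R :=
  lam eta x / qrate Gam lam x.

Fixpoint stepSeqs (G : list Z) (n : nat) : list (list Z) :=
  match n with
  | O => [nil]
  | S n' => flat_map (fun e => map (cons e) (stepSeqs G n')) G
  end.

Fixpoint visits (y : Z) (s : list Z) : list Z :=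
  match s with
  | nil => [y]
  | e :: s' => y :: visits (y + e)%Z s'
  end.

Fixpoint pathProb (Gam : list Z) (lam : Z -> Z -> R) (y : Z) (s : list Z) : R :=
  match s with
  | nil => 1
  | e :: s' => jumpP Gam lam y e * pathProb Gam lam (y + e)%Z s'
  end.

(* expected total holding time along the path (sum of mean holding times
   1/q at the states left) *)
Fixpoint holdTime (Gam : list Z) (lam : Z -> Z -> R) (y : Z) (s : list Z) : R :=
  match s with
  | nil => 0
  | e :: s' => / qrate Gam lam y + holdTime Gam lam (y + e)%Z s'
  end.

Definition firstReturnb (x : Z) (s : list Z) : bool :=
  match s with
  | nil => false
  | _ :: _ =>
      let vs := visits x s in
      Z.eqb (last vs x) x &&
      negb (existsb (fun y => Z.eqb y x) (removelast (tl vs)))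
  end.

Definition firstRetProb (Gam : list Z) (lam : Z -> Z -> R) (x : Z) (n : nat) : R :=
  fold_right Rplus 0
    (map (fun s => if firstReturnb x s then pathProb Gam lam x s else 0)
         (stepSeqs (realSteps Gam) n)).

(* contribution of returns at jump number n to E_x[return time] *)
Definition firstRetTime (Gam : list Z) (lam : Z -> Z -> R) (x : Z) (n : nat) : R :=
  fold_right Rplus 0
    (map (fun s => if firstReturnb x s
                   then pathProb Gam lam x s * holdTime Gam lam x s else 0)
         (stepSeqs (realSteps Gam) n)).

(* Positive recurrence of the CTMC: every state x of S is returned to
   with probability 1, and the expected return time
   E_x[inf{t > J_1 : X_t = x}] is finite. *)
Definition positive_recurrent (S : Z -> Prop) (Gam : list Z)
    (lam : Z -> Z -> R) : Prop :=
  forall x, S x ->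
    infinite_sum (fun n => firstRetProb Gam lam x (Datatypes.S n)) 1 /\
    exists T, infinite_sum (fun n => firstRetTime Gam lam x (Datatypes.S n)) T.

Inductive reaches (S : Z -> Prop) (lam : Z -> Z -> R) : Z -> Z -> Prop :=
  | reaches_refl x : reaches S lam x x
  | reaches_step x eta y : S x -> eta <> 0%Z -> 0 < lam eta x ->
      reaches S lam (x + eta)%Z y -> reaches S lam x y.

Definition irreducible (S : Z -> Prop) (lam : Z -> Z -> R) : Prop :=
  forall x y, S x -> S y -> reaches S lam x y.

Definition gtrsim (S : Z -> Prop) (g h : Z -> R) : Prop :=
  exists C, 0 < C /\ exists N : Z, forall x, S x -> (N <= x)%Z -> h x <= C * g x.

Definition limsup_lt (S : Z -> Prop) (f : Z -> R) (a : R) : Prop :=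
  exists b, b < a /\ exists N : Z, forall x, S x -> (N <= x)%Z -> f x <= b.

From Stdlib Require Import Reals ZArith List Lra Lia FunctionalExtensionality Classical.
From Coquelicot Require Import Coquelicot.
Import ListNotations.
Open Scope R_scope.

(* Both criteria are instances of Foster's criterion for the embedded jump chain: if V >= 0 tends
   to infinity and the generator sum_eta lam_eta(x) (V(x + eta) - V(x)) is at most -eps for all large
   x, then every state is positive recurrent. Optional stopping bounds the expected holding time
   accumulated before the chain enters a finite block of states by V / eps; irreducibility shrinks
   that block, one state at a time, to a single state x, because from each removed state the chain
   escapes to the rest of the block before coming back with positive probability; and as V -> oo
   while its expectation before the return to x stays bounded, the return happens almost surely.
   The Lyapunov functions are x^(2-c) in case (a) and ln ln x in case (b). A second-order Taylor
   bound gives generator V <= V'(x) m(x) + (max of V'' near x) v(x); the hypothesis on J, resp. H_1,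
   turns this into a negative multiple of v(x) / x^c, resp. of v(x) / (x ln x)^2, and v >~ x^c
   keeps it below a negative constant. *)

Lemma sumG_nil f : sumG [] f = 0.
Proof. reflexivity. Qed.

Lemma sumG_cons a l f : sumG (a :: l) f = f a + sumG l f.
Proof. reflexivity. Qed.

Lemma sumG_ext (l : list Z) f g : (forall e, In e l -> f e = g e) -> sumG l f = sumG l g.
Proof.
  induction l as [|a l IH]; intros H; rewrite ?sumG_nil, ?sumG_cons; auto.
  rewrite H by (left; auto). rewrite IH; auto. intros; apply H; right; auto.
Qed.

Lemma sumG_le (l : list Z) f g : (forall e, In e l -> f e <= g e) -> sumG l f <= sumG l g.
Proof.
  induction l as [|a l IH]; intros H; rewrite ?sumG_nil, ?sumG_cons; [lra|].
  assert (f a <= g a) by (apply H; left; auto).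
  assert (sumG l f <= sumG l g) by (apply IH; intros; apply H; right; auto).
  lra.
Qed.

Lemma sumG_plus (l : list Z) f g : sumG l (fun e => f e + g e) = sumG l f + sumG l g.
Proof. induction l; rewrite ?sumG_nil, ?sumG_cons; [lra|]. rewrite IHl; lra. Qed.

Lemma sumG_scal (l : list Z) c f : sumG l (fun e => c * f e) = c * sumG l f.
Proof. induction l; rewrite ?sumG_nil, ?sumG_cons; [lra|]. rewrite IHl; lra. Qed.

Lemma sumG_zero (l : list Z) f : (forall e, f e = 0) -> sumG l f = 0.
Proof. intros H. induction l; rewrite ?sumG_nil, ?sumG_cons; auto. rewrite IHl, H; lra. Qed.

Lemma sumG_nonneg (l : list Z) f : (forall e, In e l -> 0 <= f e) -> 0 <= sumG l f.
Proof.
  intros H. rewrite <- (sumG_zero l (fun _ => 0)) by auto. apply sumG_le; auto.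
Qed.

Lemma sumG_term_le (l : list Z) f a :
  (forall e, In e l -> 0 <= f e) -> In a l -> f a <= sumG l f.
Proof.
  induction l as [|b l IH]; intros H Ha; [destruct Ha|]. rewrite sumG_cons.
  assert (0 <= f b) by (apply H; left; auto).
  assert (0 <= sumG l f) by (apply sumG_nonneg; intros; apply H; right; auto).
  destruct Ha as [<-|Ha]; [lra|].
  assert (f a <= sumG l f) by (apply IH; auto; intros; apply H; right; auto).
  lra.
Qed.

Lemma sumG_filter (p : Z -> bool) l f :
  sumG (filter p l) f = sumG l (fun e => if p e then f e else 0).
Proof.
  induction l as [|a l IH]; auto.
  rewrite sumG_cons, <- IH. simpl. destruct (p a); rewrite ?sumG_cons; lra.
Qed.

Lemma sumG_cv (l : list Z) (a : nat -> Z -> R) b :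
  (forall e, In e l -> Un_cv (fun n => a n e) (b e)) ->
  Un_cv (fun n => sumG l (a n)) (sumG l b).
Proof.
  induction l as [|e l IH]; intros H.
  - intros eps Heps. exists 0%nat. intros. unfold Rdist. rewrite !sumG_nil, Rminus_diag, Rabs_R0; lra.
  - rewrite sumG_cons. apply (CV_plus (fun n => a n e) (fun n => sumG l (a n))).
    + apply H; left; auto.
    + apply IH; intros; apply H; right; auto.
Qed.

Lemma sumG_bounded (l : list Z) (a : nat -> Z -> R) :
  (forall e, In e l -> exists C, forall N, a N e <= C) ->
  exists C, forall N, sumG l (a N) <= C.
Proof.
  induction l as [|e l IH]; intros H.
  - exists 0; intros; rewrite sumG_nil; lra.
  - destruct (H e (or_introl eq_refl)) as [C1 H1].
    destruct IH as [C2 H2]; [intros; apply H; right; auto|].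
    exists (C1 + C2). intros N. rewrite sumG_cons. pose proof (H1 N); pose proof (H2 N). lra.
Qed.

Lemma realSteps_In Gam e : In e (realSteps Gam) <-> In e Gam /\ e <> 0%Z.
Proof. unfold realSteps. rewrite filter_In. destruct (Z.eqb_spec e 0); simpl; intuition. Qed.

Lemma sumG_realSteps Gam f : f 0%Z = 0 -> sumG (realSteps Gam) f = sumG Gam f.
Proof.
  intros H0. unfold realSteps. rewrite sumG_filter. apply sumG_ext. intros e _.
  destruct (Z.eqb_spec e 0); simpl; subst; auto.
Qed.

Lemma max_on_range (f : Z -> R) (n : nat) :
  exists M, 0 <= M /\ forall y, (0 <= y < Z.of_nat n)%Z -> f y <= M.
Proof.
  induction n as [|n [M [HM HH]]].
  - exists 0; split; [lra|]; intros; lia.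
  - exists (Rmax M (f (Z.of_nat n))). split; [eapply Rle_trans; [exact HM|apply Rmax_l]|].
    intros y Hy. destruct (Z.eq_dec y (Z.of_nat n)) as [->|Hne]; [apply Rmax_r|].
    eapply Rle_trans; [apply HH; lia|apply Rmax_l].
Qed.

Definition indic (F : Z -> bool) (z : Z) : R := if F z then 1 else 0.

Lemma indic_nonneg F z : 0 <= indic F z.
Proof. unfold indic; destruct (F z); lra. Qed.

(** * The embedded jump chain and its taboo operators *)

Section Chain.

Variables (St : Z -> Prop) (Gam : list Z) (lam : Z -> Z -> R).
Hypothesis hS_nonneg : forall x, St x -> (0 <= x)%Z.
Hypothesis hGam : forall eta x, St x -> ~ In eta Gam -> lam eta x = 0.
Hypothesis hlam_nonneg : forall eta x, St x -> 0 <= lam eta x.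
Hypothesis hlam_out : forall eta x, St x -> ~ St (x + eta)%Z -> lam eta x = 0.
Hypothesis hv_pos : forall x, St x -> 0 < vdiff Gam lam x.
Hypothesis hirr : irreducible St lam.

Lemma qrate_pos y : St y -> 0 < qrate Gam lam y.
Proof.
  intros Sy. unfold qrate.
  destruct (classic (exists e, In e (realSteps Gam) /\ 0 < lam e y)) as [[e [He Hl]]|Hn].
  - eapply Rlt_le_trans; [exact Hl|].
    apply (sumG_term_le _ (fun e => lam e y)); auto.
  - exfalso. pose proof (hv_pos y Sy) as Hv. unfold vdiff in Hv.
    rewrite (sumG_ext _ _ (fun _ => 0)), sumG_zero in Hv; auto; [lra|].
    intros e _. destruct (Z.eq_dec e 0) as [->|Hne]; [simpl; ring|].
    destruct (Rle_lt_or_eq_dec _ _ (hlam_nonneg e y Sy)) as [Hlt|<-]; [|ring].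
    exfalso; apply Hn; exists e; split; auto. apply realSteps_In; split; auto.
    destruct (classic (In e Gam)) as [|HnG]; auto. rewrite (hGam e y Sy HnG) in Hlt; lra.
Qed.

Lemma jumpP_nonneg y e : St y -> 0 <= jumpP Gam lam y e.
Proof. intros Sy. apply Rdiv_le_0_compat; auto using qrate_pos. Qed.

Lemma jumpP_pos y e : St y -> 0 < lam e y -> 0 < jumpP Gam lam y e.
Proof. intros Sy Hl. apply Rdiv_lt_0_compat; auto using qrate_pos. Qed.

Lemma jumpP_out y e : St y -> ~ St (y + e)%Z -> jumpP Gam lam y e = 0.
Proof. intros Sy Hn. unfold jumpP. rewrite (hlam_out e y Sy Hn). unfold Rdiv; ring. Qed.

Lemma jump_support y e : St y -> 0 < lam e y -> St (y + e)%Z /\ In e Gam.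
Proof.
  intros Sy Hl. split.
  - destruct (classic (St (y + e)%Z)) as [|Hn]; auto. rewrite (hlam_out e y Sy Hn) in Hl; lra.
  - destruct (classic (In e Gam)) as [|Hn]; auto. rewrite (hGam e y Sy Hn) in Hl; lra.
Qed.

(* [jump_op g y] is E_y[g(Y_1)] for the embedded jump chain Y; [taboo_op F] kills the
   paths that start in F. Hence [taboo_iter F n g y = E_y[g(Y_n); Y_0, ..., Y_(n-1) not in F]]
   and [green F n g y] is the sum of these expectations over k < n. *)
Definition jump_op (g : Z -> R) (y : Z) : R :=
  sumG (realSteps Gam) (fun e => jumpP Gam lam y e * g (y + e)%Z).

Definition taboo_op (F : Z -> bool) (g : Z -> R) (y : Z) : R :=
  if F y then 0 else jump_op g y.

Fixpoint taboo_iter (F : Z -> bool) (n : nat) (g : Z -> R) : Z -> R :=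
  match n with O => g | S n => taboo_op F (taboo_iter F n g) end.

Fixpoint green (F : Z -> bool) (n : nat) (g : Z -> R) : Z -> R :=
  match n with
  | O => fun _ => 0
  | S n => fun y => g y + taboo_op F (green F n g) y
  end.

Definition hold (y : Z) : R := / qrate Gam lam y.

Lemma hold_pos y : St y -> 0 < hold y.
Proof. intros; apply Rinv_0_lt_compat, qrate_pos; auto. Qed.

Lemma hold_nonneg y : St y -> 0 <= hold y.
Proof. intros; left; apply hold_pos; auto. Qed.

Lemma jump_op_plus g1 g2 y : jump_op (fun z => g1 z + g2 z) y = jump_op g1 y + jump_op g2 y.
Proof. unfold jump_op. rewrite <- sumG_plus. apply sumG_ext; intros; ring. Qed.

Lemma jump_op_scal c g y : jump_op (fun z => c * g z) y = c * jump_op g y.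
Proof. unfold jump_op. rewrite <- sumG_scal. apply sumG_ext; intros; ring. Qed.

Lemma jump_op_zero y : jump_op (fun _ => 0) y = 0.
Proof. unfold jump_op. apply sumG_zero; intros; ring. Qed.

Lemma jump_op_sum (a : nat -> Z -> R) N y :
  jump_op (fun z => sum_f_R0 (fun n => a n z) N) y = sum_f_R0 (fun n => jump_op (a n) y) N.
Proof. induction N; simpl; auto. rewrite jump_op_plus, IHN; auto. Qed.

Lemma jump_op_one y : St y -> jump_op (fun _ => 1) y = 1.
Proof.
  intros Sy. unfold jump_op, jumpP. pose proof (qrate_pos y Sy).
  rewrite (sumG_ext _ _ (fun e => / qrate Gam lam y * lam e y)) by (intros; unfold Rdiv; ring).
  rewrite sumG_scal. fold (qrate Gam lam y). field. lra.
Qed.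

Lemma jump_op_mono g1 g2 y : St y -> (forall z, St z -> g1 z <= g2 z) ->
  jump_op g1 y <= jump_op g2 y.
Proof.
  intros Sy Hg. apply sumG_le. intros e _.
  destruct (classic (St (y + e)%Z)) as [Hs|Hs].
  - apply Rmult_le_compat_l; auto using jumpP_nonneg.
  - rewrite (jumpP_out y e Sy Hs). lra.
Qed.

Lemma jump_op_ext g1 g2 y : St y -> (forall z, St z -> g1 z = g2 z) ->
  jump_op g1 y = jump_op g2 y.
Proof.
  intros Sy Hg. apply Rle_antisym; apply jump_op_mono; auto; intros; rewrite Hg; auto; lra.
Qed.

Lemma jump_op_affine a c g y : St y -> jump_op (fun z => a * g z + c) y = a * jump_op g y + c.
Proof.
  intros Sy. rewrite jump_op_plus, jump_op_scal.
  rewrite (jump_op_ext (fun _ => c) (fun _ => c * 1)) by (auto; intros; ring).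
  rewrite jump_op_scal, jump_op_one; auto; ring.
Qed.

Lemma jump_op_nonneg g y : St y -> (forall z, St z -> 0 <= g z) -> 0 <= jump_op g y.
Proof. intros Sy Hg. rewrite <- (jump_op_zero y). apply jump_op_mono; auto. Qed.

Lemma jump_op_term_le g y e : St y -> (forall z, St z -> 0 <= g z) -> e <> 0%Z -> 0 < lam e y ->
  jumpP Gam lam y e * g (y + e)%Z <= jump_op g y.
Proof.
  intros Sy Hg He0 Hl. destruct (jump_support y e Sy Hl) as [_ He].
  apply (sumG_term_le _ (fun e => jumpP Gam lam y e * g (y + e)%Z)).
  - intros e' _. destruct (classic (St (y + e')%Z)) as [Hs|Hs].
    + apply Rmult_le_pos; auto using jumpP_nonneg.
    + rewrite (jumpP_out y e' Sy Hs). lra.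
  - apply realSteps_In; auto.
Qed.

Lemma jump_op_bounded (a : nat -> Z -> R) y : St y ->
  (forall z, St z -> exists C, forall N, a N z <= C) -> exists C, forall N, jump_op (a N) y <= C.
Proof.
  intros Sy Ha. apply (sumG_bounded _ (fun N e => jumpP Gam lam y e * a N (y + e)%Z)).
  intros e _. destruct (classic (St (y + e)%Z)) as [Hs|Hs].
  - destruct (Ha _ Hs) as [C HC]. exists (jumpP Gam lam y e * C). intros N.
    apply Rmult_le_compat_l; auto using jumpP_nonneg.
  - exists 0. intros; rewrite (jumpP_out y e Sy Hs); lra.
Qed.

Lemma taboo_op_mono F g1 g2 y : St y -> (forall z, St z -> g1 z <= g2 z) ->
  taboo_op F g1 y <= taboo_op F g2 y.
Proof. intros. unfold taboo_op. destruct (F y); [lra|]. apply jump_op_mono; auto. Qed.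

Lemma taboo_op_ext F g1 g2 y : St y -> (forall z, St z -> g1 z = g2 z) ->
  taboo_op F g1 y = taboo_op F g2 y.
Proof. intros. unfold taboo_op. destruct (F y); auto. apply jump_op_ext; auto. Qed.

Lemma taboo_op_plus F g1 g2 y :
  taboo_op F (fun z => g1 z + g2 z) y = taboo_op F g1 y + taboo_op F g2 y.
Proof. unfold taboo_op. destruct (F y); [lra|]. apply jump_op_plus. Qed.

Lemma taboo_op_scal F c g y : taboo_op F (fun z => c * g z) y = c * taboo_op F g y.
Proof. unfold taboo_op. destruct (F y); [lra|]. apply jump_op_scal. Qed.

Lemma taboo_op_zero F y : taboo_op F (fun _ => 0) y = 0.
Proof. unfold taboo_op. destruct (F y); auto. apply jump_op_zero. Qed.

Lemma taboo_op_nonneg F g y : St y -> (forall z, St z -> 0 <= g z) -> 0 <= taboo_op F g y.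
Proof. intros. unfold taboo_op. destruct (F y); [lra|]. apply jump_op_nonneg; auto. Qed.

Lemma taboo_op_sum F (a : nat -> Z -> R) N y :
  taboo_op F (fun z => sum_f_R0 (fun n => a n z) N) y = sum_f_R0 (fun n => taboo_op F (a n) y) N.
Proof. induction N; simpl; auto. rewrite taboo_op_plus, IHN; auto. Qed.

Lemma taboo_iter_nonneg F n g y : St y -> (forall z, St z -> 0 <= g z) ->
  0 <= taboo_iter F n g y.
Proof. revert y; induction n; intros y Sy Hg; simpl; auto. apply taboo_op_nonneg; auto. Qed.

Lemma taboo_iter_mono F n g1 g2 y : St y -> (forall z, St z -> g1 z <= g2 z) ->
  taboo_iter F n g1 y <= taboo_iter F n g2 y.
Proof. revert y; induction n; intros y Sy Hg; simpl; auto. apply taboo_op_mono; auto. Qed.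

Lemma taboo_iter_plus F n g1 g2 y :
  taboo_iter F n (fun z => g1 z + g2 z) y = taboo_iter F n g1 y + taboo_iter F n g2 y.
Proof.
  revert y; induction n; intros y; simpl; auto.
  rewrite (functional_extensionality _ _ IHn), taboo_op_plus; auto.
Qed.

Lemma taboo_iter_scal F n c g y : taboo_iter F n (fun z => c * g z) y = c * taboo_iter F n g y.
Proof.
  revert y; induction n; intros y; simpl; auto.
  rewrite (functional_extensionality _ _ IHn), taboo_op_scal; auto.
Qed.

Lemma taboo_iter_one_antitone F n m y : St y -> (n <= m)%nat ->
  taboo_iter F m (fun _ => 1) y <= taboo_iter F n (fun _ => 1) y.
Proof.
  intros Sy Hle. revert y Sy. induction Hle as [|m Hle IH]; intros y Sy; [lra|].
  eapply Rle_trans; [|apply IH; auto]. clear IH Hle. revert y Sy.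
  induction m; intros y Sy; simpl.
  - unfold taboo_op. destruct (F y); [lra|]. rewrite jump_op_one; auto; lra.
  - apply taboo_op_mono; auto.
Qed.

Lemma green_nonneg F n g y : St y -> (forall z, St z -> 0 <= g z) -> 0 <= green F n g y.
Proof.
  revert y; induction n; intros y Sy Hg; simpl; [lra|].
  pose proof (Hg y Sy). pose proof (taboo_op_nonneg F (green F n g) y Sy (fun z Sz => IHn z Sz Hg)).
  lra.
Qed.

Lemma green_mono F n g1 g2 y : St y -> (forall z, St z -> g1 z <= g2 z) ->
  green F n g1 y <= green F n g2 y.
Proof.
  revert y; induction n; intros y Sy Hg; simpl; [lra|].
  pose proof (Hg y Sy). pose proof (taboo_op_mono F _ _ y Sy (fun z Sz => IHn z Sz Hg)). lra.
Qed.

Lemma green_plus F n g1 g2 y :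
  green F n (fun z => g1 z + g2 z) y = green F n g1 y + green F n g2 y.
Proof.
  revert y; induction n; intros y; simpl; [lra|].
  rewrite (functional_extensionality _ _ IHn), taboo_op_plus. lra.
Qed.

Lemma green_scal F n c g y : green F n (fun z => c * g z) y = c * green F n g y.
Proof.
  revert y; induction n; intros y; simpl; [lra|].
  rewrite (functional_extensionality _ _ IHn), taboo_op_scal. lra.
Qed.

Lemma green_succ F n g y : green F (S n) g y = green F n g y + taboo_iter F n g y.
Proof.
  revert y; induction n; intros y; simpl in *; [rewrite taboo_op_zero; lra|].
  rewrite (functional_extensionality _ _ IHn), taboo_op_plus. lra.
Qed.

Lemma green_mono_n F n m g y : St y -> (forall z, St z -> 0 <= g z) -> (n <= m)%nat ->
  green F n g y <= green F m g y.
Proof.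
  intros Sy Hg Hle. induction Hle; [lra|].
  rewrite green_succ. pose proof (taboo_iter_nonneg F m g y Sy Hg). lra.
Qed.

Lemma sum_taboo_iter F g N y : sum_f_R0 (fun n => taboo_iter F n g y) N = green F (S N) g y.
Proof.
  induction N; simpl sum_f_R0; [simpl; rewrite taboo_op_zero; lra|].
  rewrite green_succ, IHN. reflexivity.
Qed.

Lemma green_ext_taboo F1 F2 n g y : St y -> (forall w, St w -> F1 w = F2 w) ->
  green F1 n g y = green F2 n g y.
Proof.
  revert y; induction n; intros y Sy HF; simpl; auto. unfold taboo_op. rewrite HF by auto.
  destruct (F2 y); auto. f_equal. apply jump_op_ext; auto.
Qed.

Lemma green_indic_add_taboo_iter F n y : St y ->
  green F n (indic F) y + taboo_iter F n (fun _ => 1) y = 1.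
Proof.
  revert y; induction n; intros y Sy; simpl; [lra|].
  rewrite Rplus_assoc, <- taboo_op_plus.
  rewrite (taboo_op_ext F _ (fun _ => 1)) by auto.
  unfold taboo_op, indic. destruct (F y); [lra|]. rewrite jump_op_one; auto; lra.
Qed.

Lemma green_indic_le1 F n y : St y -> green F n (indic F) y <= 1.
Proof.
  intros Sy. pose proof (green_indic_add_taboo_iter F n y Sy).
  pose proof (taboo_iter_nonneg F n (fun _ => 1) y Sy (fun _ _ => Rle_0_1)). lra.
Qed.

Definition green_bounded (F : Z -> bool) (g : Z -> R) : Prop :=
  forall y, St y -> exists C, forall N, green F N g y <= C.

Lemma green_hold_le_lyapunov F V eps Hm N y : 0 < eps -> 0 <= Hm ->
  (forall z, St z -> 0 <= V z) ->
  (forall z, St z -> F z = false -> jump_op V z <= V z - eps * hold z) ->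
  (forall z, St z -> F z = true -> hold z <= Hm) ->
  St y -> green F N hold y <= V y / eps + Hm.
Proof.
  intros He Hm0 HV Hd Hb. revert y. induction N; intros y Sy;
    assert (0 <= V y / eps) by (apply Rdiv_le_0_compat; auto); simpl; [lra|].
  unfold taboo_op. destruct (F y) eqn:E; [pose proof (Hb y Sy E); lra|].
  assert (jump_op (green F N hold) y <= jump_op (fun z => / eps * V z + Hm) y).
  { apply jump_op_mono; auto. intros z Sz. unfold Rdiv in IHN. rewrite Rmult_comm; auto. }
  rewrite jump_op_affine in H0 by auto. pose proof (Hd y Sy E).
  assert (/ eps * jump_op V y <= / eps * (V y - eps * hold y)).
  { apply Rmult_le_compat_l; auto. left; apply Rinv_0_lt_compat; auto. }
  replace (/ eps * (V y - eps * hold y)) with (V y / eps - hold y) in H2 by (field; lra).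
  lra.
Qed.

Definition add_taboo (F : Z -> bool) (z : Z) : Z -> bool := fun y => (F y || (y =? z))%Z%bool.

(* Following a path from w to x in F, with positive probability the chain either reaches F
   from w without visiting z, or reaches F from z without returning to z. *)
Lemma taboo_escape F z x w : F z = false -> F x = true -> reaches St lam w x ->
  (exists N, 0 < green (add_taboo F z) N (indic F) w) \/
  (exists N, 0 < jump_op (green (add_taboo F z) N (indic F)) z).
Proof.
  intros Fz Fx Hr. induction Hr as [w|w eta t Sw Heta Hl _ IH].
  - left. exists 1%nat. simpl. rewrite taboo_op_zero. unfold indic; rewrite Fx; lra.
  - destruct (IH Fx) as [[N HN]|HP]; [|right; auto].
    pose proof (jumpP_pos w eta Sw Hl) as Hj.
    assert (Hge := jump_op_term_le (green (add_taboo F z) N (indic F)) w eta Sw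
      (fun z0 Sz0 => green_nonneg _ N _ z0 Sz0 (fun _ _ => indic_nonneg F _)) Heta Hl).
    pose proof (Rmult_lt_0_compat _ _ Hj HN).
    destruct (F w) eqn:Fw; [|destruct (Z.eq_dec w z) as [->|Hne]].
    + left. exists 1%nat. simpl. rewrite taboo_op_zero. unfold indic; rewrite Fw; lra.
    + right. exists N. lra.
    + left. exists (S N). simpl. unfold taboo_op.
      replace (add_taboo F z w) with false
        by (unfold add_taboo; rewrite Fw; destruct (Z.eqb_spec w z); auto; contradiction).
      unfold indic at 1. rewrite Fw. lra.
Qed.

Lemma indic_add_taboo F z w : F z = false ->
  indic (add_taboo F z) w = indic (fun u => (u =? z)%Z) w + indic F w.
Proof.
  intros Fz. unfold indic, add_taboo.
  destruct (Z.eqb_spec w z) as [->|]; [rewrite Fz; simpl; lra|].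
  destruct (F w); simpl; lra.
Qed.

Lemma return_before_taboo_lt1 F z x : St z -> St x -> F z = false -> F x = true ->
  exists delta, 0 < delta /\ forall N,
    jump_op (green (add_taboo F z) N (indic (fun u => (u =? z)%Z))) z <= 1 - delta.
Proof.
  intros Sz Sx Fz Fx. set (FF := add_taboo F z). set (iz := indic (fun u => (u =? z)%Z)).
  destruct (taboo_escape F z x z Fz Fx (hirr z x Sz Sx)) as [[N HN]|[N1 HN1]].
  - exfalso. destruct N; simpl in HN; [lra|].
    unfold taboo_op, add_taboo, indic in HN. rewrite Fz, Z.eqb_refl in HN. simpl in HN. lra.
  - exists (jump_op (green FF N1 (indic F)) z). split; [exact HN1|]. intros N.
    set (M := Nat.max N N1).
    assert (jump_op (green FF N iz) z <= jump_op (green FF M iz) z).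
    { apply jump_op_mono; auto. intros; apply green_mono_n; [auto|intros; apply indic_nonneg|unfold M; lia]. }
    assert (jump_op (green FF N1 (indic F)) z <= jump_op (green FF M (indic F)) z).
    { apply jump_op_mono; auto. intros; apply green_mono_n; [auto|intros; apply indic_nonneg|unfold M; lia]. }
    assert (jump_op (green FF M (indic FF)) z <= 1).
    { rewrite <- (jump_op_one z Sz). apply jump_op_mono; auto. intros; apply green_indic_le1; auto. }
    assert (jump_op (green FF M (indic FF)) z =
            jump_op (green FF M iz) z + jump_op (green FF M (indic F)) z).
    { rewrite <- jump_op_plus. apply jump_op_ext; auto. intros w _. rewrite <- green_plus.
      f_equal. apply functional_extensionality; intros; apply indic_add_taboo; auto. }
    lra.
Qed.

(* Renewal at z: an excursion avoiding F either avoids z, or reaches z and restarts. *)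
Lemma green_remove_le F z N w : St z -> St w -> F z = false ->
  green F N hold w <= green (add_taboo F z) N hold w +
    green (add_taboo F z) N (indic (fun u => (u =? z)%Z)) w * jump_op (green F N hold) z.
Proof.
  intros Sz Sw Fz. set (FF := add_taboo F z). set (iz := indic (fun u => (u =? z)%Z)).
  set (B := fun n => jump_op (green F n hold) z). change (jump_op (green F N hold) z) with (B N).
  assert (HB0 : forall n, 0 <= B n).
  { intros; apply jump_op_nonneg; auto. intros; apply green_nonneg; auto using hold_nonneg. }
  assert (HBm : forall n, B n <= B (S n)).
  { intros; apply jump_op_mono; auto. intros; apply green_mono_n; auto using hold_nonneg. }
  revert w Sw. induction N; intros w Sw; [simpl; lra|].
  change (hold w + taboo_op F (green F N hold) w <=
    hold w + taboo_op FF (green FF N hold) w + (iz w + taboo_op FF (green FF N iz) w) * B (S N)).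
  pose proof (HB0 (S N)). pose proof (HBm N).
  unfold taboo_op. destruct (F w) eqn:Fw; [|destruct (Z.eq_dec w z) as [->|Hne]].
  - replace (FF w) with true by (unfold FF, add_taboo; rewrite Fw; auto).
    pose proof (indic_nonneg (fun u => (u =? z)%Z) w). fold iz in H1. nra.
  - replace (FF z) with true by (unfold FF, add_taboo; rewrite Z.eqb_refl, Bool.orb_true_r; auto).
    replace (iz z) with 1 by (unfold iz, indic; rewrite Z.eqb_refl; auto).
    fold (B N). lra.
  - replace (FF w) with false
      by (unfold FF, add_taboo; rewrite Fw; destruct (Z.eqb_spec w z); auto; contradiction).
    replace (iz w) with 0 by (unfold iz, indic; destruct (Z.eqb_spec w z); auto; contradiction).
    assert (jump_op (green F N hold) w <= jump_op (fun u => green FF N hold u + B N * green FF N iz u) w).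
    { apply jump_op_mono; auto. intros; rewrite (Rmult_comm (B N)); auto. }
    rewrite jump_op_plus, jump_op_scal in H1.
    assert (0 <= jump_op (green FF N iz) w).
    { apply jump_op_nonneg; auto. intros; apply green_nonneg; [auto|intros; apply indic_nonneg]. }
    pose proof (Rmult_le_compat_l _ _ _ H2 H0). lra.
Qed.

Lemma green_bounded_remove F z x : St z -> St x -> F z = false -> F x = true ->
  green_bounded (add_taboo F z) hold -> green_bounded F hold.
Proof.
  intros Sz Sx Fz Fx Hb.
  destruct (return_before_taboo_lt1 F z x Sz Sx Fz Fx) as [delta [Hd Hrho]].
  set (FF := add_taboo F z) in *. set (iz := indic (fun u => (u =? z)%Z)) in *.
  destruct (jump_op_bounded (fun N => green FF N hold) z Sz Hb) as [Cz HCz].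
  set (B := fun N => jump_op (green F N hold) z).
  assert (HB0 : forall n, 0 <= B n).
  { intros; apply jump_op_nonneg; auto. intros; apply green_nonneg; auto using hold_nonneg. }
  assert (HdB : forall N, B N <= Cz / delta).
  { intros N. apply (Rmult_le_reg_l delta); auto. replace (delta * (Cz / delta)) with Cz by (field; lra).
    assert (B N <= jump_op (fun u => green FF N hold u + B N * green FF N iz u) z).
    { apply jump_op_mono; auto. intros; rewrite (Rmult_comm (B N)); apply green_remove_le; auto. }
    rewrite jump_op_plus, jump_op_scal in H. pose proof (HCz N). pose proof (Hrho N).
    pose proof (Rmult_le_compat_l _ _ _ (HB0 N) H1). lra. }
  intros y Sy. destruct (Hb y Sy) as [Cy HCy]. exists (Cy + Cz / delta). intros N.
  pose proof (green_remove_le F z N y Sz Sy Fz) as Hren. fold FF iz in Hren.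
  change (jump_op (green F N hold) z) with (B N) in Hren. pose proof (HCy N). pose proof (HdB N).
  assert (green FF N iz y <= 1).
  { eapply Rle_trans; [|apply (green_indic_le1 FF N y Sy)]. apply green_mono; auto.
    intros w _. unfold FF, iz. rewrite indic_add_taboo by auto. pose proof (indic_nonneg F w). lra. }
  assert (0 <= green FF N iz y) by (apply green_nonneg; [auto|intros; apply indic_nonneg]).
  pose proof (HB0 N). nra.
Qed.

Definition taboo_block (x : Z) (k : nat) : Z -> bool :=
  fun y => ((y =? x) || ((0 <=? y) && (y <? Z.of_nat k)))%Z%bool.

Lemma taboo_block_succ x k w :
  taboo_block x (S k) w = add_taboo (taboo_block x k) (Z.of_nat k) w.
Proof.
  unfold taboo_block, add_taboo. rewrite Nat2Z.inj_succ.
  destruct (Z.eqb_spec w x), (Z.leb_spec 0 w), (Z.ltb_spec w (Z.of_nat k)),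
    (Z.ltb_spec w (Z.succ (Z.of_nat k))), (Z.eqb_spec w (Z.of_nat k)); simpl; auto; lia.
Qed.

Lemma green_bounded_ext F1 F2 g : (forall w, St w -> F1 w = F2 w) ->
  green_bounded F1 g -> green_bounded F2 g.
Proof.
  intros HF Hb y Sy. destruct (Hb y Sy) as [C HC]. exists C. intros N.
  rewrite <- (green_ext_taboo F1 F2); auto.
Qed.

(* Irreducibility lets us shrink a finite taboo set down to the single state x. *)
Lemma green_bounded_singleton x k : St x ->
  green_bounded (taboo_block x k) hold -> green_bounded (fun w => (w =? x)%Z) hold.
Proof.
  intros Sx. induction k as [|k IH]; intros Hk.
  - apply (green_bounded_ext (taboo_block x 0)); auto. intros w _. unfold taboo_block.
    destruct (w =? x)%Z; simpl; auto. destruct (Z.leb_spec 0 w), (Z.ltb_spec w 0); simpl; auto; lia.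
  - apply IH. set (z := Z.of_nat k).
    assert (Hk' : green_bounded (add_taboo (taboo_block x k) z) hold).
    { apply (green_bounded_ext (taboo_block x (S k))); auto. intros; apply taboo_block_succ. }
    destruct (classic (St z /\ taboo_block x k z = false)) as [[Sz Fz]|Hn].
    + apply (green_bounded_remove _ z x Sz Sx Fz); auto.
      unfold taboo_block; rewrite Z.eqb_refl; auto.
    + apply (green_bounded_ext (add_taboo (taboo_block x k) z)); auto. intros w Sw.
      unfold add_taboo. destruct (Z.eqb_spec w z) as [->|]; [|apply Bool.orb_false_r].
      destruct (taboo_block x k z) eqn:E; auto. exfalso; apply Hn; auto.
Qed.

Lemma indic_below_le_hold (n : Z) :
  exists c, 0 <= c /\ forall w, St w -> indic (fun y => (y <? n)%Z) w <= c * hold w.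
Proof.
  destruct (max_on_range (qrate Gam lam) (Z.to_nat n)) as [M [HM HHM]].
  exists M. split; auto. intros w Sw. unfold indic. pose proof (hold_pos w Sw).
  destruct (Z.ltb_spec w n); [|apply Rmult_le_pos; lra].
  assert (qrate Gam lam w <= M) by (apply HHM; pose proof (hS_nonneg w Sw); lia).
  pose proof (qrate_pos w Sw). unfold hold in *.
  apply (Rmult_le_reg_l (qrate Gam lam w)); auto. rewrite Rmult_1_r.
  replace (qrate Gam lam w * (M * / qrate Gam lam w)) with M by (field; lra). lra.
Qed.

Lemma taboo_iter_eventually_small F g y eps : 0 < eps ->
  (exists C, forall N, green F N g y <= C) -> exists n, taboo_iter F n g y < eps.
Proof.
  intros He [C HC]. apply NNPP. intros Hn.
  assert (Hg : forall N, INR N * eps <= green F N g y).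
  { induction N; [simpl; lra|]. rewrite green_succ, S_INR.
    assert (eps <= taboo_iter F N g y) by (apply Rnot_lt_le; intro; apply Hn; eauto). lra. }
  destruct (INR_archimed eps C He) as [N HN]. pose proof (Hg N); pose proof (HC N). lra.
Qed.

Lemma taboo_iter_lyapunov F V K h n y : St y -> 0 <= K ->
  (forall z, St z -> taboo_op F V z <= V z + K * h z) ->
  taboo_iter F n V y <= V y + K * green F n h y.
Proof.
  intros Sy HK HV. revert y Sy. induction n; intros y Sy; simpl; [lra|].
  eapply Rle_trans; [apply (taboo_op_mono F _ (fun w => V w + K * green F n h w)); auto|].
  rewrite taboo_op_plus, taboo_op_scal. pose proof (HV y Sy). lra.
Qed.

(* Lyapunov-type criterion for P_y(the chain avoids F forever) = 0. *)
Lemma taboo_iter_one_cv0 F V K h y : St y -> 0 <= K ->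
  (forall z, St z -> 0 <= V z) ->
  (forall M, exists Nm, forall z, St z -> (Nm <= z)%Z -> M < V z) ->
  (forall z, St z -> taboo_op F V z <= V z + K * h z) ->
  (exists C, forall N, green F N h y <= C) ->
  (forall n, exists C, forall N, green F N (indic (fun w => (w <? n)%Z)) y <= C) ->
  Un_cv (fun n => taboo_iter F n (fun _ => 1) y) 0.
Proof.
  intros Sy HK HV Hinf HTV [Cb HCb] Hbelow eps Heps.
  assert (HCb0 : 0 <= Cb) by (pose proof (HCb 0%nat); simpl in *; lra).
  set (A := V y + K * Cb).
  assert (HA : 0 <= A) by (unfold A; pose proof (HV y Sy); pose proof (Rmult_le_pos _ _ HK HCb0); lra).
  set (M := 2 * (A + 1) / eps).
  assert (HM : 0 < M) by (unfold M; apply Rdiv_lt_0_compat; lra).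
  assert (HAM : / M * A <= eps / 2).
  { apply (Rmult_le_reg_l M); auto. rewrite <- Rmult_assoc, Rinv_r, Rmult_1_l by lra.
    unfold M. replace (2 * (A + 1) / eps * (eps / 2)) with (A + 1) by (field; lra). lra. }
  destruct (Hinf M) as [Nm HNm].
  destruct (taboo_iter_eventually_small F (indic (fun w => (w <? Nm)%Z)) y (eps / 2))
    as [n0 Hn0]; [lra|auto|].
  assert (Hone : taboo_iter F n0 (fun _ => 1) y <=
    taboo_iter F n0 (indic (fun w => (w <? Nm)%Z)) y + / M * taboo_iter F n0 V y).
  { rewrite <- taboo_iter_scal, <- taboo_iter_plus. apply taboo_iter_mono; auto.
    intros u Su. pose proof (HV u Su). assert (0 <= / M * V u) by (apply Rmult_le_pos; auto; left; apply Rinv_0_lt_compat; auto).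
    unfold indic. destruct (Z.ltb_spec u Nm); [lra|].
    pose proof (HNm u Su H1). assert (1 < / M * V u); [|lra].
    apply (Rmult_lt_reg_l M); auto. rewrite <- Rmult_assoc, Rinv_r, Rmult_1_l, Rmult_1_r by lra. auto. }
  assert (HVn : / M * taboo_iter F n0 V y <= / M * A).
  { apply Rmult_le_compat_l; [left; apply Rinv_0_lt_compat; auto|].
    pose proof (taboo_iter_lyapunov F V K h n0 y Sy HK HTV). pose proof (HCb n0).
    unfold A. pose proof (Rmult_le_compat_l _ _ _ HK H0). lra. }
  exists n0. intros n Hn. unfold Rdist. rewrite Rminus_0_r.
  pose proof (taboo_iter_nonneg F n (fun _ => 1) y Sy (fun _ _ => Rle_0_1)).
  rewrite Rabs_right by lra.
  pose proof (taboo_iter_one_antitone F n0 n y Sy ltac:(lia)). lra.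
Qed.

(** ** First-return probabilities and times as taboo iterates *)

Fixpoint hits_first (x y : Z) (s : list Z) : bool :=
  match s with
  | nil => (y =? x)%Z
  | e :: s' => (negb (y =? x) && hits_first x (y + e) s')%Z%bool
  end.

Lemma visits_ne_nil y s : visits y s <> nil.
Proof. destruct s; simpl; congruence. Qed.

Lemma hits_first_visits x s : forall y d,
  ((last (visits y s) d =? x) &&
   negb (existsb (fun w => (w =? x)%Z) (removelast (visits y s))))%Z%bool = hits_first x y s.
Proof.
  induction s as [|e s IH]; intros y d; [simpl; destruct (y =? x)%Z; reflexivity|].
  change (visits y (e :: s)) with (y :: visits (y + e)%Z s).
  destruct (visits (y + e)%Z s) as [|v vs] eqn:Hv; [contradiction (visits_ne_nil _ _ Hv)|].
  change (hits_first x y (e :: s)) with (negb (y =? x)%Z && hits_first x (y + e)%Z s)%bool.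
  rewrite <- (IH (y + e)%Z d), Hv. simpl.
  destruct (y =? x)%Z; simpl; [|reflexivity]. now rewrite Bool.andb_false_r.
Qed.

Lemma firstReturnb_cons x e s : firstReturnb x (e :: s) = hits_first x (x + e) s.
Proof.
  unfold firstReturnb. rewrite <- (hits_first_visits x s (x + e)%Z x).
  change (visits x (e :: s)) with (x :: visits (x + e)%Z s).
  destruct (visits (x + e)%Z s) eqn:Hv; [contradiction (visits_ne_nil _ _ Hv)|reflexivity].
Qed.

Definition sumL {A : Type} (l : list A) (F : A -> R) : R := fold_right Rplus 0 (map F l).

Lemma sumL_app {A} (l1 l2 : list A) F : sumL (l1 ++ l2) F = sumL l1 F + sumL l2 F.
Proof. unfold sumL. rewrite map_app. induction l1; simpl; [lra|]. rewrite IHl1. lra. Qed.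

Lemma sumL_ext {A} (l : list A) F1 F2 : (forall s, F1 s = F2 s) -> sumL l F1 = sumL l F2.
Proof. intros H; unfold sumL. f_equal. apply map_ext. auto. Qed.

Lemma sumL_plus {A} (l : list A) F1 F2 : sumL l (fun s => F1 s + F2 s) = sumL l F1 + sumL l F2.
Proof. unfold sumL; induction l; simpl; [lra|]. rewrite IHl; lra. Qed.

Lemma sumL_scal {A} (l : list A) c F : sumL l (fun s => c * F s) = c * sumL l F.
Proof. unfold sumL; induction l; simpl; [lra|]. rewrite IHl; lra. Qed.

Lemma sumL_zero {A} (l : list A) F : (forall s, F s = 0) -> sumL l F = 0.
Proof. intros H; unfold sumL; induction l; simpl; auto. rewrite IHl, H; lra. Qed.

Lemma sumL_stepSeqs G n F :
  sumL (stepSeqs G (S n)) F = sumG G (fun e => sumL (stepSeqs G n) (fun s => F (e :: s))).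
Proof.
  change (stepSeqs G (S n)) with (flat_map (fun e => map (cons e) (stepSeqs G n)) G).
  generalize (stepSeqs G n) as L. intros L. induction G as [|a G IH]; [reflexivity|].
  simpl flat_map. rewrite sumL_app, IH, sumG_cons. f_equal. unfold sumL. rewrite map_map. reflexivity.
Qed.

Definition first_hit_prob (x : Z) (n : nat) (y : Z) : R :=
  sumL (stepSeqs (realSteps Gam) n)
    (fun s => if hits_first x y s then pathProb Gam lam y s else 0).

Definition first_hit_time (x : Z) (n : nat) (y : Z) : R :=
  sumL (stepSeqs (realSteps Gam) n)
    (fun s => if hits_first x y s then pathProb Gam lam y s * holdTime Gam lam y s else 0).

Lemma first_hit_prob_taboo_iter x n :
  first_hit_prob x n = taboo_iter (fun w => (w =? x)%Z) n (indic (fun w => (w =? x)%Z)).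
Proof.
  induction n; apply functional_extensionality; intros y.
  - unfold first_hit_prob, sumL, indic. simpl. destruct (y =? x)%Z; lra.
  - simpl. rewrite <- IHn. unfold first_hit_prob at 1. rewrite sumL_stepSeqs.
    unfold taboo_op, jump_op. destruct (y =? x)%Z eqn:E.
    + apply sumG_zero; intros e. apply sumL_zero; intros s. simpl. rewrite E. reflexivity.
    + apply sumG_ext; intros e _. unfold first_hit_prob. rewrite <- sumL_scal.
      apply sumL_ext; intros s. simpl. rewrite E. simpl. destruct (hits_first x (y + e) s); lra.
Qed.

Lemma first_hit_time_0 x y : first_hit_time x 0 y = 0.
Proof. unfold first_hit_time, sumL. simpl. destruct (y =? x)%Z; lra. Qed.

Lemma first_hit_time_S x n y : first_hit_time x (S n) y =
  hold y * first_hit_prob x (S n) y + taboo_op (fun w => (w =? x)%Z) (first_hit_time x n) y.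
Proof.
  unfold first_hit_time at 1, first_hit_prob. rewrite !sumL_stepSeqs.
  unfold taboo_op, jump_op. destruct (y =? x)%Z eqn:E.
  - rewrite !sumG_zero; [ring| |]; intros e; apply sumL_zero; intros s; simpl; rewrite E; reflexivity.
  - rewrite <- sumG_scal, <- sumG_plus. apply sumG_ext; intros e _. unfold first_hit_time.
    rewrite <- !sumL_scal, <- sumL_plus. apply sumL_ext; intros s. simpl. rewrite E. simpl.
    unfold hold. destruct (hits_first x (y + e) s); lra.
Qed.

Lemma firstRetProb_jump_op x n : firstRetProb Gam lam x (S n) = jump_op (first_hit_prob x n) x.
Proof.
  unfold firstRetProb. fold (sumL (stepSeqs (realSteps Gam) (S n))
    (fun s => if firstReturnb x s then pathProb Gam lam x s else 0)).
  rewrite sumL_stepSeqs. unfold jump_op. apply sumG_ext; intros e _. unfold first_hit_prob.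
  rewrite <- sumL_scal. apply sumL_ext; intros s. rewrite firstReturnb_cons. simpl.
  destruct (hits_first x (x + e) s); lra.
Qed.

Lemma firstRetTime_jump_op x n : firstRetTime Gam lam x (S n) =
  jump_op (fun z => hold x * first_hit_prob x n z + first_hit_time x n z) x.
Proof.
  unfold firstRetTime. fold (sumL (stepSeqs (realSteps Gam) (S n))
    (fun s => if firstReturnb x s then pathProb Gam lam x s * holdTime Gam lam x s else 0)).
  rewrite sumL_stepSeqs. unfold jump_op. apply sumG_ext; intros e _.
  unfold first_hit_prob, first_hit_time. rewrite <- !sumL_scal, <- sumL_plus, <- sumL_scal.
  apply sumL_ext; intros s. rewrite firstReturnb_cons. simpl. unfold hold.
  destruct (hits_first x (x + e) s); lra.
Qed.

Lemma Un_cv_const c : Un_cv (fun _ => c) c.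
Proof. intros eps He. exists 0%nat. intros. unfold Rdist. rewrite Rminus_diag, Rabs_R0; lra. Qed.

Lemma jump_op_cv0 (g : nat -> Z -> R) y : St y ->
  (forall z, St z -> Un_cv (fun n => g n z) 0) -> Un_cv (fun n => jump_op (g n) y) 0.
Proof.
  intros Sy Hg. unfold jump_op.
  rewrite <- (sumG_zero (realSteps Gam) (fun e => jumpP Gam lam y e * 0)) by (intros; ring).
  apply (sumG_cv _ (fun n e => jumpP Gam lam y e * g n (y + e)%Z)). intros e _.
  destruct (classic (St (y + e)%Z)) as [Se|Se].
  - apply (CV_mult (fun _ => jumpP Gam lam y e)); auto using Un_cv_const.
  - rewrite (jumpP_out y e Sy Se). apply (Un_cv_ext (fun _ => 0 * 0)); [intros; ring|].
    apply Un_cv_const.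
Qed.

Lemma sum_first_hit_prob x N z : St z ->
  sum_f_R0 (fun n => first_hit_prob x n z) N =
  1 - taboo_iter (fun w => (w =? x)%Z) (S N) (fun _ => 1) z.
Proof.
  intros Sz. rewrite (sum_eq _ (fun n => taboo_iter (fun w => (w =? x)%Z) n
    (indic (fun w => (w =? x)%Z)) z)) by (intros; rewrite first_hit_prob_taboo_iter; auto).
  rewrite sum_taboo_iter. pose proof (green_indic_add_taboo_iter (fun w => (w =? x)%Z) (S N) z Sz).
  lra.
Qed.

Lemma first_hit_prob_nonneg x n z : St z -> 0 <= first_hit_prob x n z.
Proof.
  intros Sz. rewrite first_hit_prob_taboo_iter. apply taboo_iter_nonneg; auto.
  intros; apply indic_nonneg.
Qed.

Lemma return_prob_one x : St x ->
  (forall y, St y -> Un_cv (fun n => taboo_iter (fun w => (w =? x)%Z) n (fun _ => 1) y) 0) ->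
  infinite_sum (fun n => firstRetProb Gam lam x (S n)) 1.
Proof.
  intros Sx Hsurv. set (Fx := fun w => (w =? x)%Z).
  assert (Heq : forall N, 1 - jump_op (taboo_iter Fx (S N) (fun _ => 1)) x =
                          sum_f_R0 (fun n => firstRetProb Gam lam x (S n)) N).
  { intros N. rewrite (sum_eq _ (fun n => jump_op (first_hit_prob x n) x))
      by (intros; apply firstRetProb_jump_op).
    rewrite <- jump_op_sum.
    rewrite (jump_op_ext (fun z => sum_f_R0 (fun n => first_hit_prob x n z) N)
              (fun z => -1 * taboo_iter Fx (S N) (fun _ => 1) z + 1)); auto.
    - rewrite jump_op_affine; auto. lra.
    - intros z Sz. rewrite sum_first_hit_prob by auto. fold Fx. lra. }
  apply (Un_cv_ext _ _ Heq). rewrite <- (Rminus_0_r 1) at 1.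
  apply (CV_minus (fun _ => 1)); [apply Un_cv_const|].
  apply (jump_op_cv0 (fun n => taboo_iter Fx (S n) (fun _ => 1))); auto.
  intros z Sz eps He. destruct (Hsurv z Sz eps He) as [N HN]. exists N. intros; apply HN; lia.
Qed.

Lemma sum_first_hit_time_le x N z : St z ->
  sum_f_R0 (fun n => first_hit_time x n z) N <= green (fun w => (w =? x)%Z) (S N) hold z.
Proof.
  set (Fx := fun w => (w =? x)%Z). revert z. induction N; intros z Sz.
  - simpl. rewrite first_hit_time_0, taboo_op_zero. pose proof (hold_nonneg z Sz). lra.
  - rewrite decomp_sum by lia. simpl pred. rewrite first_hit_time_0, Rplus_0_l.
    rewrite (sum_eq _ (fun n => first_hit_prob x (S n) z * hold z +
                                taboo_op Fx (first_hit_time x n) z))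
      by (intros; rewrite first_hit_time_S; unfold Fx; ring).
    rewrite plus_sum, <- scal_sum, <- taboo_op_sum.
    assert (sum_f_R0 (fun n => first_hit_prob x (S n) z) N <= 1).
    { pose proof (sum_first_hit_prob x (S N) z Sz). rewrite decomp_sum in H by lia.
      pose proof (first_hit_prob_nonneg x 0 z Sz).
      pose proof (taboo_iter_nonneg Fx (S (S N)) (fun _ => 1) z Sz (fun _ _ => Rle_0_1)).
      simpl pred in H. fold Fx in H. lra. }
    change (green Fx (S (S N)) hold z) with (hold z + taboo_op Fx (green Fx (S N) hold) z).
    pose proof (taboo_op_mono Fx _ _ z Sz IHN). pose proof (hold_nonneg z Sz).
    pose proof (Rmult_le_compat_l _ _ _ H1 H). lra.
Qed.

Lemma first_hit_time_nonneg x n z : St z -> 0 <= first_hit_time x n z.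
Proof.
  revert z; induction n; intros z Sz; [rewrite first_hit_time_0; lra|].
  rewrite first_hit_time_S. pose proof (first_hit_prob_nonneg x (S n) z Sz).
  pose proof (hold_nonneg z Sz). pose proof (taboo_op_nonneg (fun w => (w =? x)%Z) _ z Sz IHn).
  nra.
Qed.

Lemma return_time_finite x : St x -> green_bounded (fun w => (w =? x)%Z) hold ->
  exists T, infinite_sum (fun n => firstRetTime Gam lam x (S n)) T.
Proof.
  intros Sx HU.
  set (a := fun n z => hold x * first_hit_prob x n z + first_hit_time x n z).
  assert (Ha0 : forall n z, St z -> 0 <= a n z).
  { intros n z Sz. unfold a. pose proof (first_hit_prob_nonneg x n z Sz).
    pose proof (first_hit_time_nonneg x n z Sz). pose proof (hold_nonneg x Sx). nra. }
  assert (Heq : forall N, sum_f_R0 (fun n => firstRetTime Gam lam x (S n)) N =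
                          jump_op (fun z => sum_f_R0 (fun n => a n z) N) x).
  { intros N. rewrite jump_op_sum. apply sum_eq. intros; apply firstRetTime_jump_op. }
  destruct (jump_op_bounded (fun N z => sum_f_R0 (fun n => a n z) N) x Sx) as [C HC].
  { intros z Sz. destruct (HU z Sz) as [Cz HCz]. exists (hold x + Cz). intros N. unfold a.
    rewrite plus_sum, (sum_eq _ (fun n => first_hit_prob x n z * hold x)) by (intros; ring).
    rewrite <- scal_sum, sum_first_hit_prob by auto.
    pose proof (sum_first_hit_time_le x N z Sz). pose proof (HCz (S N)).
    pose proof (taboo_iter_nonneg (fun w => (w =? x)%Z) (S N) (fun _ => 1) z Sz (fun _ _ => Rle_0_1)).
    pose proof (hold_nonneg x Sx). nra. }
  destruct (growing_cv (sum_f_R0 (fun n => firstRetTime Gam lam x (S n)))) as [T HT].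
  - intros N. simpl. rewrite firstRetTime_jump_op.
    pose proof (jump_op_nonneg (a (S N)) x Sx (Ha0 (S N))). unfold a in H. lra.
  - exists C. intros r [N ->]. rewrite Heq. apply HC.
  - exists T. exact HT.
Qed.

Lemma green_bounded_indic_below F : green_bounded F hold ->
  forall n, green_bounded F (indic (fun w => (w <? n)%Z)).
Proof.
  intros Hb n y Sy. destruct (indic_below_le_hold n) as [c [Hc Hcb]].
  destruct (Hb y Sy) as [C HC]. exists (c * C). intros N.
  eapply Rle_trans; [apply (green_mono F N _ (fun w => c * hold w)); auto|].
  rewrite green_scal. apply Rmult_le_compat_l; auto.
Qed.

(** ** Foster's criterion *)

Definition generator (V : Z -> R) (y : Z) : R :=
  sumG Gam (fun e => lam e y * (V (y + e)%Z - V y)).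

Lemma jump_op_sub_generator V y : St y -> jump_op V y - V y = hold y * generator V y.
Proof.
  intros Sy.
  replace (jump_op V y - V y) with (jump_op (fun z => 1 * V z + - V y) y)
    by (rewrite jump_op_affine; auto; ring).
  unfold generator. rewrite <- (sumG_realSteps Gam (fun e => lam e y * (V (y + e)%Z - V y)))
    by (rewrite Z.add_0_r; ring).
  unfold jump_op. rewrite <- sumG_scal. apply sumG_ext. intros e _. unfold jumpP, hold, Rdiv. ring.
Qed.

Section Foster.

Variables (V : Z -> R) (eps : R) (N0 : Z).
Hypothesis heps : 0 < eps.
Hypothesis hV_nonneg : forall z, St z -> 0 <= V z.
Hypothesis hV_infty : forall M, exists Nm, forall y, St y -> (Nm <= y)%Z -> M < V y.
Hypothesis hV_drift : forall y, St y -> (N0 <= y)%Z -> generator V y <= - eps.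

Lemma jump_op_lyapunov_far y : St y -> (N0 <= y)%Z -> jump_op V y <= V y - eps * hold y.
Proof.
  intros Sy Hy. pose proof (jump_op_sub_generator V y Sy). pose proof (hV_drift y Sy Hy).
  pose proof (hold_nonneg y Sy). nra.
Qed.

Lemma taboo_block_false_far x y : St y -> taboo_block x (Z.to_nat N0) y = false -> (N0 <= y)%Z.
Proof.
  intros Sy E. pose proof (hS_nonneg y Sy). unfold taboo_block in E.
  apply Bool.orb_false_iff in E as [_ E]. rewrite (proj2 (Z.leb_le 0 y)) in E by lia.
  apply Z.ltb_ge in E. lia.
Qed.

Lemma green_hold_bounded x : St x -> green_bounded (fun w => (w =? x)%Z) hold.
Proof.
  intros Sx. apply (green_bounded_singleton x (Z.to_nat N0) Sx).
  destruct (max_on_range hold (Z.to_nat N0)) as [Hm0 [Hm0p Hm0b]].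
  intros y Sy. exists (V y / eps + Rmax Hm0 (hold x)). intros N.
  apply green_hold_le_lyapunov; auto.
  - eapply Rle_trans; [exact Hm0p|apply Rmax_l].
  - intros z Sz E. apply jump_op_lyapunov_far; auto. apply (taboo_block_false_far x); auto.
  - intros z Sz E. unfold taboo_block in E. apply Bool.orb_true_iff in E as [E|E].
    + apply Z.eqb_eq in E; subst z. apply Rmax_r.
    + apply Bool.andb_true_iff in E as [E1 E2]. apply Z.leb_le in E1. apply Z.ltb_lt in E2.
      eapply Rle_trans; [apply Hm0b; lia|apply Rmax_l].
Qed.

Lemma taboo_op_lyapunov x : exists K, 0 <= K /\ forall y, St y ->
  taboo_op (fun w => (w =? x)%Z) V y <= V y + K * indic (fun w => (w <? Z.of_nat (Z.to_nat N0))%Z) y.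
Proof.
  destruct (max_on_range (fun y => jump_op V y - V y) (Z.to_nat N0)) as [K [HK HKb]].
  exists K. split; auto. intros y Sy. pose proof (hV_nonneg y Sy).
  unfold taboo_op, indic. destruct (y =? x)%Z; [destruct (_ <? _)%Z; nra|].
  destruct (Z.ltb_spec y (Z.of_nat (Z.to_nat N0))).
  - pose proof (hS_nonneg y Sy). pose proof (HKb y ltac:(lia)). lra.
  - pose proof (jump_op_lyapunov_far y Sy ltac:(lia)). pose proof (hold_nonneg y Sy). nra.
Qed.

Theorem foster_criterion : positive_recurrent St Gam lam.
Proof.
  intros x Sx. pose proof (green_hold_bounded x Sx) as HU. split.
  - apply return_prob_one; auto. intros y Sy.
    destruct (taboo_op_lyapunov x) as [K [HK HTV]].
    apply (taboo_iter_one_cv0 _ V K _ y Sy HK hV_nonneg hV_infty HTV).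
    + apply (green_bounded_indic_below _ HU); auto.
    + intros n. apply (green_bounded_indic_below _ HU); auto.
  - apply return_time_finite; auto.
Qed.

End Foster.

End Chain.

(** * Second-order Taylor bounds for Lyapunov functions *)

Lemma Rabs_le_bounds e E : Rabs e <= E -> - E <= e <= E.
Proof. intros H. pose proof (Rle_abs e). pose proof (Rle_abs (- e)). rewrite Rabs_Ropp in H1. lra. Qed.

Lemma ln_le_mono a b : 0 < a -> a <= b -> ln a <= ln b.
Proof.
  intros Ha Hab. destruct (Rle_lt_or_eq_dec a b Hab) as [Hlt| ->]; [|lra].
  left; apply ln_increasing; auto.
Qed.

Lemma taylor_upper (f f1 f2 : R -> R) (y E K e : R) :
  (forall t, y - E <= t <= y + E -> derivable_pt_lim f t (f1 t)) ->
  (forall t, y - E <= t <= y + E -> derivable_pt_lim f1 t (f2 t)) ->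
  (forall t, y - E <= t <= y + E -> f2 t <= K) -> Rabs e <= E ->
  f (y + e) <= f y + f1 y * e + K * e ^ 2 / 2.
Proof.
  intros Hf Hf1 Hf2 He.
  set (phi1 := fun t => f1 y + K * (t - y) - f1 t).
  set (phi := fun t => f y + f1 y * (t - y) + K * (t - y) ^ 2 / 2 - f t).
  assert (Dphi1 : forall t, y - E <= t <= y + E -> derivable_pt_lim phi1 t (K - f2 t)).
  { intros t Ht. assert (derivable_pt_lim (fun t => f1 y + K * (t - y)) t K).
    { apply is_derive_Reals. auto_derive; auto. ring. }
    exact (derivable_pt_lim_minus _ _ _ _ _ H (Hf1 t Ht)). }
  assert (Dphi : forall t, y - E <= t <= y + E -> derivable_pt_lim phi t (phi1 t)).
  { intros t Ht.
    assert (derivable_pt_lim (fun t => f y + f1 y * (t - y) + K * (t - y) ^ 2 / 2) t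
              (f1 y + K * (t - y))).
    { apply is_derive_Reals. auto_derive; auto. field. }
    exact (derivable_pt_lim_minus _ _ _ _ _ H (Hf t Ht)). }
  assert (He2 : - E <= e <= E) by (apply Rabs_le_bounds; auto).
  assert (Hphi1y : phi1 y = 0) by (unfold phi1; ring).
  (* phi1 has the sign of t - y on the interval, so phi decreases then increases. *)
  assert (A : forall t, y < t <= y + E -> 0 <= phi1 t).
  { intros t Ht. destruct (MVT_cor2 phi1 (fun t => K - f2 t) y t) as [c [Hc1 Hc2]]; [lra| |].
    - intros c Hc; apply Dphi1; lra.
    - pose proof (Hf2 c ltac:(lra)). nra. }
  assert (B : forall t, y - E <= t < y -> phi1 t <= 0).
  { intros t Ht. destruct (MVT_cor2 phi1 (fun t => K - f2 t) t y) as [c [Hc1 Hc2]]; [lra| |].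
    - intros c Hc; apply Dphi1; lra.
    - pose proof (Hf2 c ltac:(lra)). nra. }
  assert (phi (y + e) >= 0).
  { assert (phi y = 0) by (unfold phi; field).
    destruct (Rtotal_order e 0) as [Hlt|[->|Hgt]].
    - destruct (MVT_cor2 phi phi1 (y + e) y) as [c [Hc1 Hc2]]; [lra| |].
      + intros c Hc; apply Dphi; lra.
      + pose proof (B c ltac:(lra)). nra.
    - rewrite Rplus_0_r; lra.
    - destruct (MVT_cor2 phi phi1 y (y + e)) as [c [Hc1 Hc2]]; [lra| |].
      + intros c Hc; apply Dphi; lra.
      + pose proof (A c ltac:(lra)). nra. }
  unfold phi in H. lra.
Qed.

Lemma generator_le_taylor Gam lam y (V : Z -> R) f1 K :
  (forall e, In e Gam -> 0 <= lam e y) ->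
  (forall e, In e Gam -> V (y + e)%Z - V y <= f1 * IZR e + K * IZR e ^ 2 / 2) ->
  generator Gam lam V y <= f1 * drift Gam lam y + K * vdiff Gam lam y.
Proof.
  intros Hl HV. unfold generator. eapply Rle_trans.
  - apply (sumG_le _ _ (fun e => f1 * (IZR e * lam e y) + (K / 2) * (IZR e ^ 2 * lam e y))).
    intros e He. pose proof (Hl e He). pose proof (HV e He).
    replace (f1 * (IZR e * lam e y) + K / 2 * (IZR e ^ 2 * lam e y))
      with (lam e y * (f1 * IZR e + K * IZR e ^ 2 / 2)) by field.
    apply Rmult_le_compat_l; auto.
  - rewrite sumG_plus, !sumG_scal. unfold drift, vdiff. right; field.
Qed.

Lemma jump_size_le Gam e : In e Gam -> Rabs (IZR e) <= sumG Gam (fun e => Rabs (IZR e)).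
Proof. intros. apply (sumG_term_le _ (fun e => Rabs (IZR e))); auto. intros; apply Rabs_pos. Qed.

Lemma jump_sizes_nonneg Gam : 0 <= sumG Gam (fun e => Rabs (IZR e)).
Proof. apply sumG_nonneg; intros; apply Rabs_pos. Qed.

Lemma up_le_IZR (r : R) (z : Z) : (up r <= z)%Z -> r < IZR z.
Proof. intros Hz. destruct (archimed r) as [H1 _]. apply IZR_le in Hz. lra. Qed.

Lemma exp_sub1_abs_le w : Rabs w <= / 2 -> Rabs (exp w - 1) <= 2 * Rabs w.
Proof.
  intros Hw. pose proof (exp_ineq1_le w). pose proof (exp_ineq1_le (- w)).
  apply Rabs_le_bounds in Hw. pose proof (exp_pos w). rewrite exp_Ropp in H0.
  assert (exp w * (1 - w) <= 1).
  { apply (Rmult_le_reg_r (/ exp w)); [apply Rinv_0_lt_compat; auto|].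
    rewrite Rmult_comm, <- Rmult_assoc, Rinv_l, Rmult_1_l by lra. lra. }
  apply Rabs_le. destruct (Rle_dec 0 w).
  - rewrite Rabs_right by lra. nra.
  - rewrite Rabs_left1 by lra. nra.
Qed.

Lemma ln_sub_le t y : 0 < t -> 0 < y -> y * (ln t - ln y) <= t - y.
Proof.
  intros Ht Hy. pose proof (exp_ineq1_le (ln t - ln y)).
  unfold Rminus at 2 in H. rewrite exp_plus, exp_Ropp, !exp_ln in H by auto.
  apply (Rmult_le_compat_l y) in H; [|lra]. replace (y * (t * / y)) with t in H by (field; lra).
  nra.
Qed.

Lemma ln_sub_ge t y : 0 < t -> 0 < y -> t - y <= t * (ln t - ln y).
Proof. intros Ht Hy. pose proof (ln_sub_le y t Hy Ht). nra. Qed.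

Lemma ln_sub_abs_le t y E : 0 < y - E -> y - E <= t <= y + E ->
  (y - E) * Rabs (ln t - ln y) <= E.
Proof.
  intros H1 H2. pose proof (ln_sub_le t y ltac:(lra) ltac:(lra)).
  pose proof (ln_sub_ge t y ltac:(lra) ltac:(lra)).
  destruct (Rle_dec 0 (ln t - ln y)).
  - rewrite Rabs_right by lra. nra.
  - rewrite Rabs_left1 by lra. nra.
Qed.

Lemma ln_ge1 t : 3 <= t -> 1 <= ln t.
Proof.
  intros Ht. rewrite <- (ln_exp 1). apply ln_le_mono; [apply exp_pos|].
  pose proof exp_le_3. lra.
Qed.

Lemma exp_mul_ln_split s t : 0 < t -> exp (s * ln t) = exp ((s - 2) * ln t) * t * t.
Proof.
  intros Ht. replace (s * ln t) with ((s - 2) * ln t + ln t + ln t) by ring.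
  rewrite !exp_plus, exp_ln by auto. ring.
Qed.

Lemma rpow_unbounded a : 0 < a ->
  forall M, exists N : Z, forall y : Z, (N <= y)%Z -> M < exp (a * ln (IZR y)).
Proof.
  intros Ha M. exists (up (exp (ln (Rabs M + 1) / a))). intros y Hy.
  pose proof (up_le_IZR _ _ Hy). pose proof (exp_pos (ln (Rabs M + 1) / a)).
  assert (ln (Rabs M + 1) / a < ln (IZR y)).
  { rewrite <- (ln_exp (ln (Rabs M + 1) / a)) at 1. apply ln_increasing; auto. }
  assert (ln (Rabs M + 1) < a * ln (IZR y)).
  { apply (Rmult_lt_compat_l a) in H1; auto.
    replace (a * (ln (Rabs M + 1) / a)) with (ln (Rabs M + 1)) in H1 by (field; lra). auto. }
  apply exp_increasing in H2. rewrite exp_ln in H2 by (pose proof (Rabs_pos M); lra).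
  pose proof (Rle_abs M). lra.
Qed.

(* Near y, the second derivative a (a - 1) t^(a-2) of t^a exceeds its value at y by at most
   a |a - 1| eta y^(a-2). *)
Lemma rpow_taylor_step a E eta : 0 < a -> 0 <= E -> 0 < eta ->
  exists R0, forall y e, R0 < y -> Rabs e <= E ->
    exp (a * ln (y + e)) - exp (a * ln y) <= a * exp (a * ln y) / y * e +
      exp ((a - 2) * ln y) * (a * (a - 1) + a * Rabs (a - 1) * eta) * e ^ 2 / 2.
Proof.
  intros Ha HE Heta.
  set (theta := Rmin (/ 2) (eta / 2)).
  assert (Hth : 0 < theta) by (apply Rmin_pos; lra).
  assert (Hth1 : theta <= / 2) by apply Rmin_l.
  assert (Hth2 : theta <= eta / 2) by apply Rmin_r.
  set (D := Rabs (a - 2) * E).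
  assert (HD : 0 <= D) by (apply Rmult_le_pos; auto; apply Rabs_pos).
  exists (E + 1 + D / theta). intros y e Hy He.
  assert (HDth : D <= theta * (y - E)).
  { replace D with (theta * (D / theta)) by (field; lra). apply Rmult_le_compat_l; lra. }
  set (Y := exp ((a - 2) * ln y)). assert (HY : 0 < Y) by apply exp_pos.
  assert (Hdiv : 0 <= D / theta) by (apply Rdiv_le_0_compat; lra).
  enough (exp (a * ln (y + e)) <= exp (a * ln y) + a * exp (a * ln y) / y * e +
            Y * (a * (a - 1) + a * Rabs (a - 1) * eta) * e ^ 2 / 2) by lra.
  apply (taylor_upper (fun t => exp (a * ln t)) (fun t => a * exp (a * ln t) / t)
           (fun t => a * (a - 1) * exp (a * ln t) / (t * t)) y E); auto.
  - intros t Ht. apply is_derive_Reals. auto_derive; [lra|field; lra].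
  - intros t Ht. apply is_derive_Reals. auto_derive; [lra|field; lra].
  - intros t Ht. assert (Ht0 : 0 < t) by lra.
    rewrite (exp_mul_ln_split a t Ht0).
    replace (a * (a - 1) * (exp ((a - 2) * ln t) * t * t) / (t * t))
      with (a * (a - 1) * exp ((a - 2) * ln t)) by (field; lra).
    set (w := (a - 2) * (ln t - ln y)).
    replace (exp ((a - 2) * ln t)) with (Y * exp w) by (unfold Y, w; rewrite <- exp_plus; f_equal; ring).
    assert (Hw : Rabs w <= theta).
    { apply (Rmult_le_reg_r (y - E)); [lra|]. unfold w. rewrite Rabs_mult.
      pose proof (ln_sub_abs_le t y E ltac:(lra) Ht).
      pose proof (Rmult_le_compat_l _ _ _ (Rabs_pos (a - 2)) H). unfold D in HDth. lra. }
    pose proof (exp_sub1_abs_le w ltac:(lra)) as Hew.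
    assert (Hex : (a - 1) * (exp w - 1) <= Rabs (a - 1) * eta).
    { eapply Rle_trans; [apply Rle_abs|]. rewrite Rabs_mult.
      apply Rmult_le_compat_l; [apply Rabs_pos|lra]. }
    replace (a * (a - 1) * (Y * exp w)) with (Y * (a * (a - 1)) + (a * Y) * ((a - 1) * (exp w - 1)))
      by ring.
    assert (0 < a * Y) by nra. nra.
Qed.

Lemma power_drift_bound a b C y m v eta : 0 < a -> 0 < C -> 0 < y -> 0 < v -> 0 <= eta ->
  m * y <= b * v -> exp ((2 - a) * ln y) <= C * v ->
  Rabs (a - 1) * eta <= (1 - a - b) / 2 ->
  a * exp (a * ln y) / y * m + exp ((a - 2) * ln y) * (a * (a - 1) + a * Rabs (a - 1) * eta) * v
    <= - (a * (1 - a - b) / (2 * C)).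
Proof.
  intros Ha HC Hy Hv Heta0 Hm Hvc Heta.
  set (Y := exp ((a - 2) * ln y)). assert (HY : 0 < Y) by apply exp_pos.
  rewrite (exp_mul_ln_split a y Hy). fold Y.
  replace (a * (Y * y * y) / y * m) with (a * Y * (m * y)) by (field; lra).
  assert (HYv : / C <= Y * v).
  { assert (HY1 : Y * exp ((2 - a) * ln y) = 1).
    { unfold Y. rewrite <- exp_plus. replace ((a - 2) * ln y + (2 - a) * ln y) with 0 by ring.
      apply exp_0. }
    apply (Rmult_le_reg_l C); auto. rewrite Rinv_r by lra.
    rewrite <- HY1. replace (C * (Y * v)) with (Y * (C * v)) by ring.
    apply Rmult_le_compat_l; lra. }
  assert (a * Y * (m * y) <= a * Y * (b * v)) by (apply Rmult_le_compat_l; nra).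
  assert (Y * v * (a * Rabs (a - 1) * eta) <= Y * v * (a * ((1 - a - b) / 2))).
  { apply Rmult_le_compat_l; [nra|]. rewrite Rmult_assoc. apply Rmult_le_compat_l; lra. }
  assert (- (a * (1 - a - b) / 2) * (Y * v) <= - (a * (1 - a - b) / 2) * / C).
  { apply Rmult_le_compat_neg_l; auto.
    pose proof (Rmult_le_pos _ _ (Rabs_pos (a - 1)) Heta0). nra. }
  replace (- (a * (1 - a - b) / (2 * C))) with (- (a * (1 - a - b) / 2) * / C) by (field; lra).
  nra.
Qed.

Lemma mul_ln_le k y : 0 <= k -> 0 < y -> 4 * (k * k) <= y -> k * ln y <= y.
Proof.
  intros Hk Hy Hky. set (s := sqrt y).
  assert (Hs : 0 < s) by (apply sqrt_lt_R0; auto).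
  assert (Hss : s * s = y) by (apply sqrt_sqrt; lra).
  assert (Hln : ln y = 2 * ln s) by (rewrite <- Hss, ln_mult by auto; ring).
  assert (ln s <= s - 1) by (pose proof (exp_ineq1_le (ln s)); rewrite exp_ln in H by auto; lra).
  assert (2 * k <= s) by nra.
  rewrite Hln. nra.
Qed.

Lemma lnln_unbounded M : exists N : Z, forall y : Z, (N <= y)%Z -> M < Rmax 0 (ln (ln (IZR y))).
Proof.
  exists (up (exp (exp (Rabs M + 1)))). intros y Hy. pose proof (up_le_IZR _ _ Hy).
  pose proof (exp_pos (exp (Rabs M + 1))). pose proof (exp_pos (Rabs M + 1)).
  assert (exp (Rabs M + 1) < ln (IZR y)).
  { rewrite <- (ln_exp (exp (Rabs M + 1))) at 1. apply ln_increasing; auto. }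
  assert (Rabs M + 1 < ln (ln (IZR y))).
  { rewrite <- (ln_exp (Rabs M + 1)) at 1. apply ln_increasing; auto. }
  pose proof (Rmax_r 0 (ln (ln (IZR y)))). pose proof (Rle_abs M). lra.
Qed.

(* -(l + 1) / (t l)^2, with l = ln t, is the second derivative of ln ln at t. *)
Lemma lnln_curvature_mono t T l m : 0 < t <= T -> 1 <= l <= m ->
  - (l + 1) / (t * t * (l * l)) <= - (m + 1) / (T * T * (m * m)).
Proof.
  intros Ht Hl. unfold Rdiv. rewrite !Ropp_mult_distr_l_reverse. apply Ropp_le_contravar.
  replace ((m + 1) * / (T * T * (m * m))) with ((m + 1) / (m * m) * / (T * T)) by (field; lra).
  replace ((l + 1) * / (t * t * (l * l))) with ((l + 1) / (l * l) * / (t * t)) by (field; lra).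
  apply Rmult_le_compat.
  - apply Rdiv_le_0_compat; nra.
  - left; apply Rinv_0_lt_compat; nra.
  - apply (Rmult_le_reg_r (m * m * (l * l))); [apply Rmult_lt_0_compat; nra|].
    replace ((m + 1) / (m * m) * (m * m * (l * l))) with ((m + 1) * (l * l)) by (field; lra).
    replace ((l + 1) / (l * l) * (m * m * (l * l))) with ((l + 1) * (m * m)) by (field; lra).
    assert (0 <= (m - l) * (l * m + m + l)) by (apply Rmult_le_pos; nra). nra.
  - apply Rinv_le_contravar; nra.
Qed.

Lemma lnln_taylor_step E y e : 0 <= E -> E + 3 <= y -> Rabs e <= E ->
  ln (ln (y + e)) - ln (ln y) <=
  / (y * ln y) * e + - (ln (y + E) + 1) / ((y + E) * (y + E) * (ln (y + E) * ln (y + E))) * e ^ 2 / 2.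
Proof.
  intros HE Hy He.
  enough (ln (ln (y + e)) <= ln (ln y) + / (y * ln y) * e +
    - (ln (y + E) + 1) / ((y + E) * (y + E) * (ln (y + E) * ln (y + E))) * e ^ 2 / 2) by lra.
  apply (taylor_upper (fun t => ln (ln t)) (fun t => / (t * ln t))
           (fun t => - (ln t + 1) / (t * t * (ln t * ln t))) y E); auto.
  - intros t Ht. assert (1 <= ln t) by (apply ln_ge1; lra).
    apply is_derive_Reals. auto_derive; [repeat split; lra|field; repeat split; lra].
  - intros t Ht. assert (1 <= ln t) by (apply ln_ge1; lra).
    apply is_derive_Reals. auto_derive; [repeat split; try lra; nra|field; repeat split; lra].
  - intros t Ht. apply lnln_curvature_mono; [lra|]. split; [apply ln_ge1; lra|].
    apply ln_le_mono; lra.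
Qed.

(* With u = E / y: (y + E)^2 (L + r)^2 <= y^2 L^2 (1 + u)^4 <= y^2 L^2 (1 + 5 u). *)
Lemma lnln_curvature_compare y L r E beta : 0 < y -> 1 <= L -> 0 <= E -> 0 <= r ->
  y * r <= E -> / 2 <= beta < 1 -> 60 * E * L <= (1 - beta) * y ->
  (L + beta) * ((y + E) * (y + E)) * ((L + r) * (L + r)) <= (L + r + 1) * (y * y) * (L * L).
Proof.
  intros Hy HL HE Hr HyrE Hbeta HEL. set (u := E / y).
  assert (Hu0 : 0 <= u) by (apply Rdiv_le_0_compat; lra).
  assert (HyE : y + E = y * (1 + u)) by (unfold u; field; lra).
  assert (Hru : r <= u) by (unfold u; apply (Rmult_le_reg_l y); auto; field_simplify; lra).
  assert (HuL : 60 * u * L <= 1 - beta).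
  { apply (Rmult_le_reg_r y); auto. unfold u. field_simplify; lra. }
  assert (Hu : u <= / 120) by nra.
  assert (HLr : L + r <= L * (1 + u)) by nra.
  assert (Hu4 : (1 + u) * (1 + u) * ((1 + u) * (1 + u)) <= 1 + 5 * u) by nra.
  assert (Hgrow : (y + E) * (y + E) * ((L + r) * (L + r)) <= y * y * (L * L) * (1 + 5 * u)).
  { rewrite HyE. assert (0 <= L + r) by lra.
    assert ((L + r) * (L + r) <= L * (1 + u) * (L * (1 + u))) by (apply Rmult_le_compat; lra).
    assert (0 <= y * (1 + u) * (y * (1 + u))) by nra.
    apply Rle_trans with (y * (1 + u) * (y * (1 + u)) * (L * (1 + u) * (L * (1 + u)))).
    - apply Rmult_le_compat_l; auto.
    - replace (y * (1 + u) * (y * (1 + u)) * (L * (1 + u) * (L * (1 + u))))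
        with (y * y * (L * L) * ((1 + u) * (1 + u) * ((1 + u) * (1 + u)))) by ring.
      apply Rmult_le_compat_l; [nra|auto]. }
  assert (Hlin : (L + beta) * (1 + 5 * u) <= L + 1) by nra.
  assert (0 <= y * y * (L * L)) by nra.
  apply Rle_trans with ((L + beta) * (y * y * (L * L) * (1 + 5 * u))).
  - rewrite Rmult_assoc. apply Rmult_le_compat_l; [lra|auto].
  - replace ((L + beta) * (y * y * (L * L) * (1 + 5 * u)))
      with ((L + beta) * (1 + 5 * u) * (y * y * (L * L))) by ring.
    apply Rle_trans with ((L + 1) * (y * y * (L * L))); [apply Rmult_le_compat_r; auto|nra].
Qed.

Lemma lnln_drift_bound y E b s C m v : 3 <= y -> 0 <= E -> 0 <= b < 1 -> 0 < s -> 0 < C ->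
  0 < v -> ln y * (m * y - v) <= b * v -> exp ((2 + s) * ln y) <= C * v ->
  (ln y + (1 + b) / 2) * ((y + E) * (y + E)) * (ln (y + E) * ln (y + E)) <=
    (ln (y + E) + 1) * (y * y) * (ln y * ln y) ->
  / (y * ln y) * m + - (ln (y + E) + 1) / ((y + E) * (y + E) * (ln (y + E) * ln (y + E))) * v
    <= - ((1 - b) * s ^ 2 / (8 * C)).
Proof.
  intros Hy HE Hb Hs HC Hv Hm Hvc Hkey.
  set (L := ln y) in *. set (Lp := ln (y + E)) in *.
  assert (HL : 1 <= L) by (apply ln_ge1; lra).
  assert (HLp : 1 <= Lp) by (apply ln_ge1; lra).
  set (D := y * y * (L * L)). set (Dp := (y + E) * (y + E) * (Lp * Lp)).
  assert (HD : 0 < D) by (unfold D; apply Rmult_lt_0_compat; nra).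
  assert (HDp : 0 < Dp) by (unfold Dp; apply Rmult_lt_0_compat; nra).
  assert (Hdrift : / (y * L) * m <= v * (L + b) / D).
  { apply (Rmult_le_reg_r D); auto.
    replace (/ (y * L) * m * D) with (m * y * L) by (unfold D; field; lra).
    replace (v * (L + b) / D * D) with (v * (L + b)) by (field; lra). nra. }
  assert (Hcurv : (L + (1 + b) / 2) / D <= (Lp + 1) / Dp).
  { apply (Rmult_le_reg_r D); auto. apply (Rmult_le_reg_r Dp); auto.
    replace ((L + (1 + b) / 2) / D * D * Dp) with ((L + (1 + b) / 2) * ((y + E) * (y + E)) * (Lp * Lp))
      by (unfold Dp; field; lra).
    replace ((Lp + 1) / Dp * D * Dp) with ((Lp + 1) * (y * y) * (L * L)) by (unfold D; field; lra).
    auto. }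
  assert (Hgrowth : s * s / (4 * C) <= v / D).
  { assert (Hexp : exp ((2 + s) * L) = exp (s * L) * (y * y)).
    { replace ((2 + s) * L) with (s * L + L + L) by ring. rewrite !exp_plus. unfold L.
      rewrite exp_ln by lra. ring. }
    assert (Hsl : s * s / 4 * (L * L) <= exp (s * L)).
    { pose proof (exp_ineq1_le (s * L / 2)).
      assert (exp (s * L / 2) * exp (s * L / 2) = exp (s * L)) by (rewrite <- exp_plus; f_equal; field).
      assert (0 <= s * L / 2) by nra. nra. }
    apply (Rmult_le_reg_r (4 * C * D)); [nra|].
    replace (s * s / (4 * C) * (4 * C * D)) with (4 * (s * s / 4 * (L * L) * (y * y))) by (unfold D; field; lra).
    replace (v / D * (4 * C * D)) with (4 * (C * v)) by (field; lra).
    assert (0 <= y * y) by nra. nra. }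
  replace (- (Lp + 1) / Dp * v) with (- (v * ((Lp + 1) / Dp))) by (field; lra).
  assert (v * ((L + (1 + b) / 2) / D) <= v * ((Lp + 1) / Dp)) by (apply Rmult_le_compat_l; lra).
  replace (v * ((L + (1 + b) / 2) / D)) with (v * (L + b) / D + (1 - b) / 2 * (v / D)) in H
    by (field; lra).
  replace ((1 - b) * s ^ 2 / (8 * C)) with ((1 - b) / 2 * (s * s / (4 * C))) by (field; lra).
  assert ((1 - b) / 2 * (s * s / (4 * C)) <= (1 - b) / 2 * (v / D)) by (apply Rmult_le_compat_l; lra).
  lra.
Qed.

Lemma lnln_nonneg t : 3 <= t -> Rmax 0 (ln (ln t)) = ln (ln t).
Proof.
  intros Ht. apply Rmax_right. rewrite <- ln_1. apply ln_le_mono; [lra|apply ln_ge1; auto].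
Qed.

Lemma Jfun_le_mul Gam lam y b : 0 < vdiff Gam lam y -> Jfun Gam lam y <= b ->
  drift Gam lam y * IZR y <= b * vdiff Gam lam y.
Proof.
  intros Hv HJ. unfold Jfun in HJ. apply (Rmult_le_compat_r (vdiff Gam lam y)) in HJ; [|lra].
  replace (drift Gam lam y * IZR y / vdiff Gam lam y * vdiff Gam lam y)
    with (drift Gam lam y * IZR y) in HJ by (field; lra). lra.
Qed.

Lemma H1fun_le_mul Gam lam y b : 0 < vdiff Gam lam y -> H1fun Gam lam y <= b ->
  ln (IZR y) * (drift Gam lam y * IZR y - vdiff Gam lam y) <= b * vdiff Gam lam y.
Proof.
  intros Hv HH. unfold H1fun in HH. apply (Rmult_le_compat_r (vdiff Gam lam y)) in HH; [|lra].
  replace (ln (IZR y) * (drift Gam lam y * IZR y - vdiff Gam lam y) / vdiff Gam lam y *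
    vdiff Gam lam y) with (ln (IZR y) * (drift Gam lam y * IZR y - vdiff Gam lam y)) in HH
    by (field; lra). lra.
Qed.

(** * The two drift conditions *)

Section Drift_conditions.

Variables (St : Z -> Prop) (Gam : list Z) (lam : Z -> Z -> R).
Hypothesis hS_nonneg : forall x, St x -> (0 <= x)%Z.
Hypothesis hGam : forall eta x, St x -> ~ In eta Gam -> lam eta x = 0.
Hypothesis hlam_nonneg : forall eta x, St x -> 0 <= lam eta x.
Hypothesis hlam_out : forall eta x, St x -> ~ St (x + eta)%Z -> lam eta x = 0.
Hypothesis hv_pos : forall x, St x -> 0 < vdiff Gam lam x.
Hypothesis hirr : irreducible St lam.

Lemma positive_recurrent_of_Jfun_bound c C Ng b Nl : c < 2 -> 0 < C -> b < c - 1 ->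
  (forall y, St y -> (Ng <= y)%Z -> Rpower (IZR y) c <= C * vdiff Gam lam y) ->
  (forall y, St y -> (Nl <= y)%Z -> Jfun Gam lam y <= b) ->
  positive_recurrent St Gam lam.
Proof.
  intros Hc HC Hb Hv HJ.
  set (a := 2 - c). set (E := sumG Gam (fun e => Rabs (IZR e))).
  set (eta := (1 - a - b) / (2 * (Rabs (a - 1) + 1))).
  assert (Ha : 0 < a) by (unfold a; lra). assert (Hd : 0 < 1 - a - b) by (unfold a; lra).
  assert (Hra := Rabs_pos (a - 1)).
  assert (Heta : 0 < eta) by (apply Rdiv_lt_0_compat; lra).
  assert (Heta2 : Rabs (a - 1) * eta <= (1 - a - b) / 2).
  { unfold eta. apply (Rmult_le_reg_r (2 * (Rabs (a - 1) + 1))); [lra|].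
    replace (Rabs (a - 1) * ((1 - a - b) / (2 * (Rabs (a - 1) + 1))) * (2 * (Rabs (a - 1) + 1)))
      with (Rabs (a - 1) * (1 - a - b)) by (field; lra). nra. }
  destruct (rpow_taylor_step a E eta Ha (jump_sizes_nonneg Gam) Heta) as [R0 HT].
  apply (foster_criterion St Gam lam hS_nonneg hGam hlam_nonneg hlam_out hv_pos hirr
           (fun z => exp (a * ln (IZR z))) (a * (1 - a - b) / (2 * C))
           (Z.max (Z.max Ng Nl) (up (Rmax R0 0)))).
  - apply Rdiv_lt_0_compat; nra.
  - intros; left; apply exp_pos.
  - intros M. destruct (rpow_unbounded a Ha M) as [N HN]. exists N; auto.
  - intros y Sy Hy. pose proof (up_le_IZR (Rmax R0 0) y ltac:(lia)).
    pose proof (Rmax_l R0 0). pose proof (Rmax_r R0 0).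
    eapply Rle_trans; [apply (generator_le_taylor Gam lam y _ (a * exp (a * ln (IZR y)) / IZR y)
      (exp ((a - 2) * ln (IZR y)) * (a * (a - 1) + a * Rabs (a - 1) * eta)))|].
    + intros; apply hlam_nonneg; auto.
    + intros e He. rewrite plus_IZR. apply HT; [lra|apply jump_size_le; auto].
    + apply power_drift_bound; auto; try lra.
      * apply Jfun_le_mul; auto. apply HJ; auto; lia.
      * replace (2 - a) with c by (unfold a; ring). apply Hv; auto; lia.
Qed.

(* Lyapunov function ln ln x (truncated at 0, since ln ln is negative near 2). *)
Lemma positive_recurrent_of_H1fun_bound c C Ng b0 Nl : 2 < c -> 0 < C -> b0 < 1 ->
  (forall y, St y -> (Ng <= y)%Z -> Rpower (IZR y) c <= C * vdiff Gam lam y) ->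
  (forall y, St y -> (Nl <= y)%Z -> H1fun Gam lam y <= b0) ->
  positive_recurrent St Gam lam.
Proof.
  intros Hc HC Hb0 Hv HH.
  set (b := Rmax b0 0). set (beta := (1 + b) / 2). set (s := c - 2).
  set (E := sumG Gam (fun e => Rabs (IZR e))). set (k := 60 * E / (1 - beta)).
  assert (Hb : 0 <= b < 1) by (split; [apply Rmax_r|apply Rmax_lub_lt; lra]).
  assert (Hs : 0 < s) by (unfold s; lra). assert (HE : 0 <= E) by apply jump_sizes_nonneg.
  assert (Hk : 0 <= k) by (apply Rdiv_le_0_compat; unfold beta; lra).
  apply (foster_criterion St Gam lam hS_nonneg hGam hlam_nonneg hlam_out hv_pos hirr
           (fun z => Rmax 0 (ln (ln (IZR z)))) ((1 - b) * s ^ 2 / (8 * C))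
           (Z.max (Z.max Ng Nl) (up (Rmax (E + 3) (4 * (k * k)))))).
  - apply Rdiv_lt_0_compat; [apply Rmult_lt_0_compat; [lra|nra]|lra].
  - intros; apply Rmax_l.
  - intros M. destruct (lnln_unbounded M) as [N HN]. exists N; auto.
  - intros y Sy Hy. pose proof (up_le_IZR _ y (Z.le_trans _ _ _ (Z.le_max_r _ _) Hy)).
    pose proof (Rmax_l (E + 3) (4 * (k * k))). pose proof (Rmax_r (E + 3) (4 * (k * k))).
    set (yr := IZR y) in *.
    eapply Rle_trans; [apply (generator_le_taylor Gam lam y _ (/ (yr * ln yr))
      (- (ln (yr + E) + 1) / ((yr + E) * (yr + E) * (ln (yr + E) * ln (yr + E)))))|].
    + intros; apply hlam_nonneg; auto.
    + intros e He. pose proof (jump_size_le Gam e He). fold E in H2. pose proof (Rabs_le_bounds _ _ H2).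
      rewrite plus_IZR; fold yr. rewrite !lnln_nonneg by lra. apply lnln_taylor_step; auto; lra.
    + apply lnln_drift_bound; auto; try lra.
      * apply H1fun_le_mul; auto. eapply Rle_trans; [apply HH; auto; lia|apply Rmax_l].
      * replace (2 + s) with c by (unfold s; ring). apply Hv; auto; lia.
      * replace (ln (yr + E)) with (ln yr + (ln (yr + E) - ln yr)) by ring.
        apply lnln_curvature_compare; try (unfold beta; lra).
        -- apply ln_ge1; lra.
        -- pose proof (ln_le_mono yr (yr + E) ltac:(lra) ltac:(lra)). lra.
        -- pose proof (ln_sub_le (yr + E) yr ltac:(lra) ltac:(lra)). lra.
        -- pose proof (mul_ln_le k yr Hk ltac:(lra) ltac:(lra)). unfold k in H2.
           replace (60 * E * ln yr) with ((1 - beta) * (60 * E / (1 - beta) * ln yr))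
             by (field; unfold beta; lra).
           apply Rmult_le_compat_l; [unfold beta; lra|auto].
Qed.

End Drift_conditions.

Theorem mainTheorem10 (S : Z -> Prop) (lam : Z -> Z -> R) (Gam : list Z)
  (hS_nonneg : forall x, S x -> (0 <= x)%Z)
  (hS_inf : forall N : Z, exists x, S x /\ (N < x)%Z)
  (hGam_nodup : NoDup Gam)
  (hGam : forall eta x, S x -> ~ In eta Gam -> lam eta x = 0)
  (hlam_nonneg : forall eta x, S x -> 0 <= lam eta x)
  (hlam_out : forall eta x, S x -> ~ S (x + eta)%Z -> lam eta x = 0)
  (hv_pos : forall x, S x -> 0 < vdiff Gam lam x)
  (hirr : irreducible S lam) :
  ((exists c : R, c <= 2 /\
      gtrsim S (vdiff Gam lam) (fun x => Rpower (IZR x) c) /\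
      limsup_lt S (Jfun Gam lam) (c - 1)) \/
   (exists c : R, 2 < c /\
      gtrsim S (vdiff Gam lam) (fun x => Rpower (IZR x) c) /\
      limsup_lt S (H1fun Gam lam) 1)) ->
  positive_recurrent S Gam lam.
Proof.
  intros [[c [Hc [[C [HC [Ng HNg]]] [b [Hb [Nl HNl]]]]]] |
          [c [Hc [[C [HC [Ng HNg]]] [b [Hb [Nl HNl]]]]]]].
  - destruct (Rlt_le_dec c 2) as [Hc2|Hc2].
    + apply (positive_recurrent_of_Jfun_bound S Gam lam hS_nonneg hGam hlam_nonneg hlam_out
               hv_pos hirr c C Ng b Nl); auto.
    + (* for c = 2 any exponent in (b + 1, 2) works as well, since v >~ x^2 >= x^c' *)
      assert (c = 2) by lra. subst c.
      apply (positive_recurrent_of_Jfun_bound S Gam lam hS_nonneg hGam hlam_nonneg hlam_out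
               hv_pos hirr ((b + 3) / 2) C (Z.max Ng 1) b Nl); auto; try lra.
      intros y Sy Hy. eapply Rle_trans; [|apply HNg; auto; lia].
      apply Rle_Rpower; [|lra]. apply IZR_le. lia.
  - apply (positive_recurrent_of_H1fun_bound S Gam lam hS_nonneg hGam hlam_nonneg hlam_out
             hv_pos hirr c C Ng b Nl); auto.
Qed.
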